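(* Let $A\in M_2(\mathbb{Z})$ be an expanding matrix whose characteristic polynomial is $x^2+px+q$ with $p$ a positive integer and $q\in\{3,-3\}$. Let $k\in\mathbb{Z}\setminus\{0\}$ and let $v\in\mathbb{R}^2$ be such that $\{v,Av\}$ is linearly independent. Let $\mathcal{D}=\{0,v,kAv\}$. Then $T(A,\mathcal{D})$ is connected if and only if $k=\pm1$.
   Context: A real square matrix is expanding if all its eigenvalues have modulus strictly larger than $1$. For an expanding matrix $A\in M_n(\mathbb{Z})$ and a finite set $\mathcal{D}\subset\mathbb{R}^n$ with $|\mathcal D|=|\det A|$, the self-affine set $T(A,\mathcal{D})$ is the unique nonempty compact set $T$ with $AT=T+\mathcal{D}$; equivalently $T=\{\sum_{i=1}^\infty A^{-i}d_{j_i}: d_{j_i}\in\mathcal{D}\}$. *)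

From Stdlib Require Import Reals Lra ZArith List.
Open Scope R_scope.

Definition pt := (R * R)%type.

Definition padd (x y : pt) : pt := (fst x + fst y, snd x + snd y).
Definition pscale (c : R) (x : pt) : pt := (c * fst x, c * snd x).
Definition pzero : pt := (0, 0).

Record mat2 := Mat2 { m11 : R; m12 : R; m21 : R; m22 : R }.

Definition mapply (M : mat2) (x : pt) : pt :=
  (m11 M * fst x + m12 M * snd x, m21 M * fst x + m22 M * snd x).

Definition mdet (M : mat2) : R := m11 M * m22 M - m12 M * m21 M.
Definition mtr (M : mat2) : R := m11 M + m22 M.

Definition matZ (a b c d : Z) : mat2 := Mat2 (IZR a) (IZR b) (IZR c) (IZR d).

Definition minv (M : mat2) : mat2 :=
  Mat2 (m22 M / mdet M) (- m12 M / mdet M) (- m21 M / mdet M) (m11 M / mdet M).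

Definition mpow_apply (M : mat2) (n : nat) (x : pt) : pt := Nat.iter n (mapply M) x.

(* Complex eigenvalue lambda = re + i im of M: a root of the characteristic
   polynomial det(lambda I - M) = lambda^2 - tr(M) lambda + det(M),
   written out in real and imaginary parts. *)
Definition is_eigenvalue (M : mat2) (re im : R) : Prop :=
  re * re - im * im - mtr M * re + mdet M = 0 /\
  2 * re * im - mtr M * im = 0.

Definition expanding (M : mat2) : Prop :=
  forall re im, is_eigenvalue M re im -> re * re + im * im > 1.

Definition lin_indep2 (u w : pt) : Prop :=
  forall al be : R, padd (pscale al u) (pscale be w) = pzero -> al = 0 /\ be = 0.

(* partial sums  sum_{i=1}^{n} A^{-i} d_i  where the digit d_i is dig (i-1) *)
Fixpoint partial_sum (A : mat2) (dig : nat -> pt) (n : nat) : pt :=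
  match n with
  | O => pzero
  | S m => padd (partial_sum A dig m) (mpow_apply (minv A) (S m) (dig m))
  end.

(* The self-affine set T(A, D) = { sum_{i>=1} A^{-i} d_{j_i} : d_{j_i} in D } *)
Definition self_affine_set (A : mat2) (D : list pt) : pt -> Prop :=
  fun x => exists dig : nat -> pt,
    (forall i, In (dig i) D) /\
    Un_cv (fun n => fst (partial_sum A dig n)) (fst x) /\
    Un_cv (fun n => snd (partial_sum A dig n)) (snd x).

Definition dist2 (x y : pt) : R :=
  sqrt ((fst x - fst y) ^ 2 + (snd x - snd y) ^ 2).

Definition open2 (U : pt -> Prop) : Prop :=
  forall x, U x -> exists eps, eps > 0 /\ forall y, dist2 x y < eps -> U y.

Definition connected2 (S : pt -> Prop) : Prop :=
  ~ exists U V : pt -> Prop,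
      open2 U /\ open2 V /\
      (forall x, S x -> U x \/ V x) /\
      (exists x, S x /\ U x) /\ (exists x, S x /\ V x) /\
      (forall x, S x -> U x -> V x -> False).

From Stdlib Require Import Reals Lra Lia Psatz ZArith List Classical ClassicalEpsilon.
Import ListNotations.
Open Scope R_scope.

(* T(A, {0, v, kAv}) with char(A) = x^2 + px + q, q = ±3, is connected iff k = ±1.
   Expansion leaves (p, q) in {(1,3), (2,3), (3,3), (1,-3)}.  In the basis
   (v, Av), A becomes the companion matrix B and the digits {0, e1, k e2}, so
   it suffices to study T_k = T(B, {0, e1, k e2}).  The coordinates of
   B^{-n} z satisfy u(n+2) = -(p u(n+1) + u(n))/q, whose solutions decay like
   (9/10)^n; hence expansions converge and level-n cylinders shrink.
   - k = ±1: explicit eventually periodic pairs of expansions ("neighbour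
     cycles") show that the translates of T_k by the digits meet along a
     connected graph; a splitting of T_k into two open parts would then give
     nested cylinders meeting both parts, whose limit point is absurd.
   - |k| >= 2: a linear functional phi separates the piece of T_k with first
     digit k e2 from the others.  The bounds are affine in k, so it suffices
     to treat k = ±2 plus a slope condition, which reduce to exact integer
     inequalities decided by computation. *)

Definition psub (x y : pt) : pt := (fst x - fst y, snd x - snd y).

(* The l1 norm; it is equivalent to the Euclidean distance [dist2] and
   behaves well under coordinatewise estimates. *)
Definition norm1 (x : pt) : R := Rabs (fst x) + Rabs (snd x).

Lemma norm1_nonneg x : 0 <= norm1 x.
Proof. unfold norm1; pose proof (Rabs_pos (fst x)); pose proof (Rabs_pos (snd x)); lra. Qed.

Lemma norm1_psub_padd a b x y : norm1 (psub (padd a x) (padd b y)) <= norm1 (psub a b) + norm1 x + norm1 y.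
Proof.
  unfold norm1, psub, padd; simpl.
  replace (fst a + fst x - (fst b + fst y)) with ((fst a - fst b) + fst x + - fst y) by ring.
  replace (snd a + snd x - (snd b + snd y)) with ((snd a - snd b) + snd x + - snd y) by ring.
  pose proof (Rabs_triang (fst a - fst b + fst x) (- fst y)); pose proof (Rabs_triang (fst a - fst b) (fst x)).
  pose proof (Rabs_triang (snd a - snd b + snd x) (- snd y)); pose proof (Rabs_triang (snd a - snd b) (snd x)).
  rewrite !Rabs_Ropp in *. lra.
Qed.

Lemma dist2_le_norm1 x y : dist2 x y <= norm1 (psub x y).
Proof.
  unfold dist2, norm1, psub; simpl.
  set (a := fst x - fst y); set (b := snd x - snd y).
  pose proof (Rabs_pos a); pose proof (Rabs_pos b).
  rewrite <- (sqrt_pow2 (Rabs a + Rabs b)) by lra.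
  apply sqrt_le_1_alt.
  assert (a ^ 2 = Rabs a ^ 2) by (rewrite pow2_abs; reflexivity).
  assert (b ^ 2 = Rabs b ^ 2) by (rewrite pow2_abs; reflexivity).
  nra.
Qed.

Lemma abs_le_sqrt_sum a b : Rabs a <= sqrt (a ^ 2 + b ^ 2).
Proof.
  rewrite <- (sqrt_pow2 (Rabs a)) by apply Rabs_pos.
  apply sqrt_le_1_alt. rewrite <- (pow2_abs a). nra.
Qed.

Lemma fst_le_dist2 x y : Rabs (fst x - fst y) <= dist2 x y.
Proof. apply abs_le_sqrt_sum. Qed.

Lemma snd_le_dist2 x y : Rabs (snd x - snd y) <= dist2 x y.
Proof. unfold dist2; rewrite Rplus_comm; apply abs_le_sqrt_sum. Qed.

Lemma norm1_le_dist2 x y : norm1 (psub x y) <= 2 * dist2 x y.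
Proof.
  unfold norm1, psub; simpl.
  pose proof (fst_le_dist2 x y); pose proof (snd_le_dist2 x y); lra.
Qed.

Lemma abs_lin2 a b x y : Rabs (a * x + b * y) <= Rabs a * Rabs x + Rabs b * Rabs y.
Proof. eapply Rle_trans; [apply Rabs_triang|]. rewrite !Rabs_mult; lra. Qed.

Definition mat_norm1 (M : mat2) : R :=
  Rabs (m11 M) + Rabs (m12 M) + Rabs (m21 M) + Rabs (m22 M).

Lemma mapply_lipschitz M x y :
  norm1 (psub (mapply M x) (mapply M y)) <= mat_norm1 M * norm1 (psub x y).
Proof.
  unfold norm1, psub, mapply, mat_norm1; simpl.
  replace (m11 M * fst x + m12 M * snd x - (m11 M * fst y + m12 M * snd y))
    with (m11 M * (fst x - fst y) + m12 M * (snd x - snd y)) by ring.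
  replace (m21 M * fst x + m22 M * snd x - (m21 M * fst y + m22 M * snd y))
    with (m21 M * (fst x - fst y) + m22 M * (snd x - snd y)) by ring.
  pose proof (abs_lin2 (m11 M) (m12 M) (fst x - fst y) (snd x - snd y)).
  pose proof (abs_lin2 (m21 M) (m22 M) (fst x - fst y) (snd x - snd y)).
  pose proof (Rabs_pos (m11 M)); pose proof (Rabs_pos (m12 M)).
  pose proof (Rabs_pos (m21 M)); pose proof (Rabs_pos (m22 M)).
  pose proof (Rabs_pos (fst x - fst y)); pose proof (Rabs_pos (snd x - snd y)).
  nra.
Qed.

Lemma open2_linear_preimage M U : open2 U -> open2 (fun x => U (mapply M x)).
Proof.
  intros HU x Hx. destruct (HU _ Hx) as [eps [Heps Hball]].
  assert (Hm : 0 <= mat_norm1 M).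
  { unfold mat_norm1. pose proof (Rabs_pos (m11 M)); pose proof (Rabs_pos (m12 M)).
    pose proof (Rabs_pos (m21 M)); pose proof (Rabs_pos (m22 M)); lra. }
  exists (eps / (2 * mat_norm1 M + 1)). split; [apply Rdiv_lt_0_compat; lra|].
  intros y Hy. apply Hball.
  pose proof (dist2_le_norm1 (mapply M x) (mapply M y)).
  pose proof (mapply_lipschitz M x y). pose proof (norm1_le_dist2 x y).
  assert (0 <= dist2 x y) by apply sqrt_pos.
  apply (Rmult_lt_compat_r (2 * mat_norm1 M + 1)) in Hy; [|lra].
  unfold Rdiv in Hy. rewrite Rmult_assoc, Rinv_l in Hy by lra.
  nra.
Qed.

Lemma connected2_linear_iso (SA SB : pt -> Prop) (L Li : mat2) :
  (forall x, mapply L (mapply Li x) = x) ->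
  (forall x, mapply Li (mapply L x) = x) ->
  (forall x, SA x <-> SB (mapply Li x)) ->
  connected2 SA <-> connected2 SB.
Proof.
  intros HLLi HLiL HS. split;
    intros HC [U [V [HU [HV [Hcov [[a [Ha1 Ha2]] [[b [Hb1 Hb2]] Hdis]]]]]]]; apply HC.
  - exists (fun x => U (mapply Li x)), (fun x => V (mapply Li x)).
    repeat split; try (apply open2_linear_preimage; assumption).
    + intros x Hx; apply Hcov; apply HS; auto.
    + exists (mapply L a); rewrite HS, HLiL; auto.
    + exists (mapply L b); rewrite HS, HLiL; auto.
    + intros x Hx; apply Hdis; apply HS; auto.
  - exists (fun x => U (mapply L x)), (fun x => V (mapply L x)).
    repeat split; try (apply open2_linear_preimage; assumption).
    + intros x Hx; apply Hcov; apply HS; rewrite HLiL; auto.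
    + exists (mapply Li a); split; [apply HS; auto | rewrite HLLi; auto].
    + exists (mapply Li b); split; [apply HS; auto | rewrite HLLi; auto].
    + intros x Hx; apply Hdis; apply HS; rewrite HLiL; auto.
Qed.

Definition lin_form (g1 g2 : R) (z : pt) : R := g1 * fst z + g2 * snd z.

Lemma lin_form_lipschitz g1 g2 x y :
  Rabs (lin_form g1 g2 x - lin_form g1 g2 y) <= (Rabs g1 + Rabs g2) * dist2 x y.
Proof.
  unfold lin_form.
  replace (g1 * fst x + g2 * snd x - (g1 * fst y + g2 * snd y))
    with (g1 * (fst x - fst y) + g2 * (snd x - snd y)) by ring.
  eapply Rle_trans; [apply abs_lin2|].
  pose proof (fst_le_dist2 x y); pose proof (snd_le_dist2 x y).
  pose proof (Rabs_pos g1); pose proof (Rabs_pos g2). nra.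
Qed.

Lemma open2_lin_form_lt g1 g2 c : open2 (fun x => lin_form g1 g2 x < c).
Proof.
  intros x Hx. set (G := Rabs g1 + Rabs g2 + 1).
  assert (HG : 1 <= G) by (unfold G; pose proof (Rabs_pos g1); pose proof (Rabs_pos g2); lra).
  exists ((c - lin_form g1 g2 x) / G). split; [apply Rdiv_lt_0_compat; lra|].
  intros y Hy. pose proof (lin_form_lipschitz g1 g2 x y).
  assert (0 <= dist2 x y) by apply sqrt_pos.
  apply (Rmult_lt_compat_r G) in Hy; [|lra].
  unfold Rdiv in Hy. rewrite Rmult_assoc, Rinv_l, Rmult_1_r in Hy by lra.
  pose proof (Rle_abs (lin_form g1 g2 y - lin_form g1 g2 x)).
  rewrite Rabs_minus_sym in H1.
  pose proof (Rabs_pos g1); pose proof (Rabs_pos g2).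
  assert ((Rabs g1 + Rabs g2) * dist2 x y <= dist2 x y * G) by (unfold G; nra).
  lra.
Qed.

Lemma open2_lin_form_gt g1 g2 c : open2 (fun x => c < lin_form g1 g2 x).
Proof.
  intros x Hx. destruct (open2_lin_form_lt (- g1) (- g2) (- c) x) as [e [He H]].
  { unfold lin_form in *; lra. }
  exists e; split; auto. intros y Hy. specialize (H y Hy). unfold lin_form in *; lra.
Qed.

Lemma not_connected2_of_lin_form S g1 g2 c :
  (forall x, S x -> lin_form g1 g2 x <> c) ->
  (exists x, S x /\ lin_form g1 g2 x < c) ->
  (exists x, S x /\ c < lin_form g1 g2 x) ->
  ~ connected2 S.
Proof.
  intros Hc [a [Ha1 Ha2]] [b [Hb1 Hb2]] HC. apply HC.
  exists (fun x => lin_form g1 g2 x < c), (fun x => c < lin_form g1 g2 x).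
  repeat split.
  - apply open2_lin_form_lt.
  - apply open2_lin_form_gt.
  - intros x Hx. pose proof (Hc x Hx). lra.
  - exists a; auto.
  - exists b; auto.
  - intros x _ H1 H2; lra.
Qed.

Definition pt_lim (u : nat -> pt) (x : pt) : Prop :=
  Un_cv (fun n => fst (u n)) (fst x) /\ Un_cv (fun n => snd (u n)) (snd x).

Lemma Un_cv_const c : Un_cv (fun _ => c) c.
Proof. intros e He; exists O; intros; unfold R_dist; rewrite Rminus_diag, Rabs_R0; lra. Qed.

Lemma Un_cv_shift u l m : Un_cv (fun j => u (m + j)%nat) l -> Un_cv u l.
Proof.
  intros H e He. destruct (H e He) as [N HN]. exists (m + N)%nat. intros n Hn.
  replace n with (m + (n - m))%nat by lia. apply HN. lia.
Qed.

Lemma Un_cv_ext u u' l : (forall n, u n = u' n) -> Un_cv u l -> Un_cv u' l.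
Proof. intros He H e He'. destruct (H e He') as [N HN]. exists N. intros n Hn. rewrite <- He; auto. Qed.

Lemma Un_cv_le_eventually u l b N : Un_cv u l -> (forall n, (N <= n)%nat -> u n <= b) -> l <= b.
Proof.
  intros Hu Hb. apply (@Rle_cv_lim (fun j => u (N + j)%nat) (fun _ => b)).
  - intros; apply Hb; lia.
  - intros e He. destruct (Hu e He) as [M HM]. exists M. intros n Hn. apply HM. lia.
  - apply Un_cv_const.
Qed.

Lemma Un_cv_ge_eventually u l b N : Un_cv u l -> (forall n, (N <= n)%nat -> b <= u n) -> b <= l.
Proof.
  intros Hu Hb. apply (@Rle_cv_lim (fun _ => b) (fun j => u (N + j)%nat)).
  - intros; apply Hb; lia.
  - apply Un_cv_const.
  - intros e He. destruct (Hu e He) as [M HM]. exists M. intros n Hn. apply HM. lia.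
Qed.

Lemma Un_cv_abs_bound u l B : Un_cv u l -> (forall n, Rabs (u n) <= B) -> Rabs l <= B.
Proof.
  intros Hu Hb. apply Rabs_le. split.
  - apply (Un_cv_ge_eventually u l _ 0 Hu). intros n _. pose proof (Hb n).
    pose proof (Rle_abs (u n)); pose proof (Rle_abs (- u n)); rewrite Rabs_Ropp in *; lra.
  - apply (Un_cv_le_eventually u l _ 0 Hu). intros n _. pose proof (Hb n).
    pose proof (Rle_abs (u n)); pose proof (Rle_abs (- u n)); rewrite Rabs_Ropp in *; lra.
Qed.

Lemma pt_lim_ext u u' x : (forall n, u n = u' n) -> pt_lim u x -> pt_lim u' x.
Proof. intros He [H1 H2]; split; eapply Un_cv_ext; eauto; intros; simpl; rewrite He; reflexivity. Qed.

Lemma pt_lim_shift u x m : pt_lim (fun j => u (m + j)%nat) x -> pt_lim u x.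
Proof. intros [H1 H2]; split; eapply Un_cv_shift; eauto. Qed.

Lemma pt_lim_const x : pt_lim (fun _ => x) x.
Proof. split; apply Un_cv_const. Qed.

Lemma pt_lim_padd u u' x y : pt_lim u x -> pt_lim u' y -> pt_lim (fun n => padd (u n) (u' n)) (padd x y).
Proof. intros [H1 H2] [H3 H4]; split; simpl; apply CV_plus; auto. Qed.

Lemma pt_lim_mapply M u x : pt_lim u x -> pt_lim (fun n => mapply M (u n)) (mapply M x).
Proof. intros [H1 H2]; split; simpl; apply CV_plus; apply CV_mult; auto; apply Un_cv_const. Qed.

Lemma pt_lim_mpow M m u x : pt_lim u x -> pt_lim (fun n => mpow_apply M m (u n)) (mpow_apply M m x).
Proof. induction m; intros H; [exact H|]. apply (pt_lim_mapply M) in IHm; auto. Qed.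

Lemma pt_lim_unique u x y : pt_lim u x -> pt_lim u y -> x = y.
Proof.
  intros [H1 H2] [H3 H4]. destruct x, y; simpl in *.
  f_equal; eapply UL_sequence; eauto.
Qed.

Lemma lin_form_lim g1 g2 u x : pt_lim u x -> Un_cv (fun n => lin_form g1 g2 (u n)) (lin_form g1 g2 x).
Proof. intros [H1 H2]. apply CV_plus; apply CV_mult; auto; apply Un_cv_const. Qed.

Lemma mapply_padd M x y : mapply M (padd x y) = padd (mapply M x) (mapply M y).
Proof. unfold mapply, padd; simpl; f_equal; ring. Qed.
Lemma mapply_pscale M c x : mapply M (pscale c x) = pscale c (mapply M x).
Proof. unfold mapply, pscale; simpl; f_equal; ring. Qed.
Lemma mapply_pzero M : mapply M pzero = pzero.
Proof. unfold mapply, pzero; simpl; f_equal; ring. Qed.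
Lemma mapply_psub M x y : mapply M (psub x y) = psub (mapply M x) (mapply M y).
Proof. unfold mapply, psub; simpl; f_equal; ring. Qed.

Lemma mpow_S' M n x : mpow_apply M (S n) x = mpow_apply M n (mapply M x).
Proof. apply Nat.iter_succ_r. Qed.
Lemma mpow_add M m n x : mpow_apply M m (mpow_apply M n x) = mpow_apply M (m + n) x.
Proof. symmetry. apply Nat.iter_add. Qed.
Lemma mpow_padd M n x y : mpow_apply M n (padd x y) = padd (mpow_apply M n x) (mpow_apply M n y).
Proof. induction n; [reflexivity|]. simpl. rewrite IHn, mapply_padd; reflexivity. Qed.
Lemma mpow_pscale M n c x : mpow_apply M n (pscale c x) = pscale c (mpow_apply M n x).
Proof. induction n; [reflexivity|]. simpl. rewrite IHn, mapply_pscale; reflexivity. Qed.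
Lemma mpow_psub M n x y : mpow_apply M n (psub x y) = psub (mpow_apply M n x) (mpow_apply M n y).
Proof. induction n; [reflexivity|]. simpl. rewrite IHn, mapply_psub; reflexivity. Qed.
Lemma mpow_pzero M n : mpow_apply M n pzero = pzero.
Proof. induction n; [reflexivity|]. simpl. rewrite IHn, mapply_pzero; reflexivity. Qed.

Lemma minv_l M x : mdet M <> 0 -> mapply (minv M) (mapply M x) = x.
Proof. intros H. destruct x; unfold minv, mapply, mdet in *; simpl. f_equal; field; auto. Qed.
Lemma minv_r M x : mdet M <> 0 -> mapply M (mapply (minv M) x) = x.
Proof. intros H. destruct x; unfold minv, mapply, mdet in *; simpl. f_equal; field; auto. Qed.

Lemma lin_indep2_det v w : lin_indep2 v w -> fst v * snd w - fst w * snd v <> 0.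
Proof.
  intros Hl Hd. unfold lin_indep2, padd, pscale, pzero in Hl; simpl in Hl.
  destruct (classic (snd w = 0 /\ snd v = 0)) as [[H1 H2]|Hn].
  - destruct (classic (fst w = 0 /\ fst v = 0)) as [[H3 H4]|Hn2].
    + destruct (Hl 1 0) as [Hc _]; [f_equal; lra| lra].
    + apply Hn2. destruct (Hl (fst w) (- fst v)) as [Ha Hb];
        [f_equal; [ring|rewrite H1, H2; ring]| lra].
  - apply Hn. destruct (Hl (snd w) (- snd v)) as [Ha Hb]; [f_equal; nra| lra].
Qed.

Lemma partial_sum_ext M d d' n : (forall i, d i = d' i) -> partial_sum M d n = partial_sum M d' n.
Proof. intros H; induction n; simpl; [reflexivity|]. rewrite IHn, H; reflexivity. Qed.

(** * The admissible characteristic polynomials *)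

(* The pairs (p, q) with q = ±3, p > 0 for which x^2 + p x + q has both
   roots outside the closed unit disc. *)
Definition admissible (P Q : R) : Prop :=
  (Q = 3 /\ (P = 1 \/ P = 2 \/ P = 3)) \/ (Q = -3 /\ P = 1).

Lemma admissible_Q_neq_0 P Q : admissible P Q -> Q <> 0.
Proof. intros [[-> _]|[-> _]]; lra. Qed.

Lemma not_expanding_of_small_root M r :
  r * r - mtr M * r + mdet M = 0 -> r * r <= 1 -> ~ expanding M.
Proof.
  intros Hroot Hsmall Hexp.
  assert (r * r + 0 * 0 > 1) by (apply Hexp; split; lra). lra.
Qed.

Lemma expanding_admissible (a b c d p q : Z) :
  expanding (matZ a b c d) -> (- (a + d))%Z = p -> (a * d - b * c)%Z = q ->
  (0 < p)%Z -> (q = 3 \/ q = -3)%Z -> admissible (IZR p) (IZR q).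
Proof.
  intros He Hp Hq Hp0 Hq3.
  assert (Etr : mtr (matZ a b c d) = - IZR p).
  { unfold mtr, matZ; simpl. rewrite <- Hp, opp_IZR, plus_IZR. ring. }
  assert (Edet : mdet (matZ a b c d) = IZR q).
  { unfold mdet, matZ; simpl. rewrite <- Hq, minus_IZR, !mult_IZR. ring. }
  set (P := IZR p) in *.
  destruct Hq3 as [-> | ->].
  - left. split; [reflexivity|].
    destruct (Z_lt_le_dec p 4) as [Hl|Hl].
    + unfold P. assert (p = 1 \/ p = 2 \/ p = 3)%Z as [-> | [-> | ->]] by lia; auto.
    + (* the root (-p + sqrt(p^2 - 12))/2 lies in [-1, 0] *)
      exfalso. assert (HP : 4 <= P) by (apply IZR_le; lia).
      set (s := sqrt (P * P - 12)).
      assert (Hs2 : s * s = P * P - 12) by (apply sqrt_sqrt; nra).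
      assert (Hs0 : 0 <= s) by apply sqrt_pos.
      assert (P - 2 <= s <= P) by nra.
      apply (not_expanding_of_small_root _ ((- P + s) / 2) ltac:(rewrite Etr, Edet; simpl; nra)
        ltac:(nra) He).
  - right. split; [reflexivity|].
    destruct (Z_lt_le_dec p 2) as [Hl|Hl].
    + unfold P. assert (p = 1)%Z as -> by lia; auto.
    + (* the root (-p + sqrt(p^2 + 12))/2 lies in [0, 1] *)
      exfalso. assert (HP : 2 <= P) by (apply IZR_le; lia).
      set (s := sqrt (P * P + 12)).
      assert (Hs2 : s * s = P * P + 12) by (apply sqrt_sqrt; nra).
      assert (Hs0 : 0 <= s) by apply sqrt_pos.
      assert (P <= s <= P + 2) by nra.
      apply (not_expanding_of_small_root _ ((- P + s) / 2) ltac:(rewrite Etr, Edet; simpl; nra)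
        ltac:(nra) He).
Qed.

(** * Geometric decay of the backward recurrence *)

(* The coordinates of B^{-n} z, for B the companion matrix of x^2 + P x + Q,
   satisfy this recurrence. *)
Definition backward_rec (P Q : R) (u : nat -> R) : Prop :=
  forall n, u (S (S n)) = - (P * u (S n) + u n) / Q.

Definition rho : R := 9/10.

Lemma rho_pow_pos n : 0 < rho ^ n.
Proof. apply pow_lt; unfold rho; lra. Qed.

Lemma rho_pow_small e : 0 < e -> exists N, forall m, (N <= m)%nat -> rho ^ m < e.
Proof.
  intros He. destruct (pow_lt_1_zero rho ltac:(unfold rho; rewrite Rabs_right; lra) e He) as [N HN].
  exists N. intros m Hm. specialize (HN m Hm). rewrite Rabs_right in HN; auto.
  apply Rle_ge, Rlt_le, rho_pow_pos.
Qed.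

Lemma abs_le_of_sq_le a b : 0 <= b -> a ^ 2 <= b ^ 2 -> Rabs a <= b.
Proof.
  intros Hb H. rewrite <- (Rabs_right b) by lra. apply Rsqr_le_abs_0. unfold Rsqr. simpl in H. lra.
Qed.

(* For Q = 3 (complex roots of modulus sqrt 3) this positive definite
   quadratic form is multiplied by 1/3 at each step of the recurrence. *)
Definition energy (P x y : R) : R := y ^ 2 + P / 3 * x * y + x ^ 2 / 3.

Lemma energy_step P u : backward_rec P 3 u ->
  forall n, energy P (u n) (u (S n)) = energy P (u O) (u 1%nat) * (1/3) ^ n.
Proof.
  intros Hr. induction n; [simpl; ring|].
  replace (energy P (u O) (u 1%nat) * (1/3) ^ S n)
    with (energy P (u O) (u 1%nat) * (1/3) ^ n * (1/3)) by (simpl; ring).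
  rewrite <- IHn. unfold energy. rewrite Hr. field.
Qed.

Lemma backward_rec_decay_complex P u : (P = 1 \/ P = 2 \/ P = 3) -> backward_rec P 3 u ->
  forall n, Rabs (u n) <= 4 * (Rabs (u O) + Rabs (u 1%nat)) * rho ^ n.
Proof.
  intros HP Hr n.
  set (c := Rabs (u O) + Rabs (u 1%nat)).
  assert (Hc : 0 <= c) by (unfold c; pose proof (Rabs_pos (u O)); pose proof (Rabs_pos (u 1%nat)); lra).
  assert (Hinit : 0 <= energy P (u O) (u 1%nat) <= c ^ 2).
  { unfold energy, c. pose proof (Rabs_pos (u O)); pose proof (Rabs_pos (u 1%nat)).
    assert (E1 : u O ^ 2 = Rabs (u O) ^ 2) by (rewrite pow2_abs; auto).
    assert (E2 : u 1%nat ^ 2 = Rabs (u 1%nat) ^ 2) by (rewrite pow2_abs; auto).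
    pose proof (Rle_abs (u O * u 1%nat)). pose proof (Rle_abs (- (u O * u 1%nat))).
    pose proof (pow2_ge_0 (u 1%nat + P * u O / 6)). pose proof (pow2_ge_0 (u O)).
    rewrite Rabs_Ropp, Rabs_mult in *.
    destruct HP as [-> | [-> | ->]]; split; nra. }
  assert (Hcoerc : u n ^ 2 <= 12 * energy P (u n) (u (S n))).
  { unfold energy. pose proof (pow2_ge_0 (u (S n) + P * u n / 6)). pose proof (pow2_ge_0 (u n)).
    destruct HP as [-> | [-> | ->]]; nra. }
  assert (Hrate : (1/3) ^ n <= rho ^ n * rho ^ n).
  { rewrite <- Rpow_mult_distr. apply pow_incr. unfold rho; lra. }
  assert (0 <= (1/3) ^ n) by (apply pow_le; lra).
  pose proof (rho_pow_pos n).
  rewrite (energy_step P u Hr n) in Hcoerc.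
  apply abs_le_of_sq_le; [nra|].
  assert (energy P (u O) (u 1%nat) * (1/3) ^ n <= c ^ 2 * (rho ^ n * rho ^ n))
    by (apply Rmult_le_compat; lra).
  nra.
Qed.

Lemma backward_rec_decay_real u : backward_rec 1 (-3) u ->
  forall n, Rabs (u n) <= 4 * (Rabs (u O) + Rabs (u 1%nat)) * rho ^ n.
Proof.
  intros Hr.
  set (c := Rabs (u O) + Rabs (u 1%nat)).
  assert (Hc : 0 <= c) by (unfold c; pose proof (Rabs_pos (u O)); pose proof (Rabs_pos (u 1%nat)); lra).
  assert (H : forall n, Rabs (u n) <= 10/9 * c * rho ^ n /\ Rabs (u (S n)) <= 10/9 * c * rho ^ S n).
  { induction n.
    - unfold c, rho; simpl; pose proof (Rabs_pos (u O)); pose proof (Rabs_pos (u 1%nat)); lra.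
    - destruct IHn as [H1 H2]. split; auto.
      rewrite Hr. replace (- (1 * u (S n) + u n) / -3) with ((u (S n) + u n) / 3) by field.
      unfold Rdiv. rewrite Rabs_mult, (Rabs_right (/3)) by lra.
      pose proof (Rabs_triang (u (S n)) (u n)). pose proof (rho_pow_pos n).
      assert (E1 : rho ^ S (S n) = rho ^ n * (81/100)) by (simpl; unfold rho; lra).
      assert (E2 : rho ^ S n = rho ^ n * (9/10)) by (simpl; unfold rho; lra).
      rewrite E1. rewrite E2 in H2. nra. }
  intros n. destruct (H n) as [H1 _]. pose proof (rho_pow_pos n). nra.
Qed.

Lemma backward_rec_decay P Q u : admissible P Q -> backward_rec P Q u ->
  forall n, Rabs (u n) <= 4 * (Rabs (u O) + Rabs (u 1%nat)) * rho ^ n.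
Proof.
  intros [[-> HP] | [-> ->]] Hr.
  - apply (backward_rec_decay_complex P); auto.
  - apply backward_rec_decay_real; auto.
Qed.

Lemma backward_rec_shift P Q u c : backward_rec P Q u -> backward_rec P Q (fun j => u (c + j)%nat).
Proof.
  intros Hr n. replace (c + S (S n))%nat with (S (S (c + n))) by lia.
  rewrite Hr. replace (c + S n)%nat with (S (c + n)) by lia. reflexivity.
Qed.

Definition companion (P Q : R) : mat2 := Mat2 0 (-Q) 1 (-P).

Section Companion.
Variables P Q : R.
Hypothesis HPQ : admissible P Q.

Let HQ : Q <> 0 := admissible_Q_neq_0 P Q HPQ.

Definition comp_inv (z : pt) : pt := mapply (minv (companion P Q)) z.
Definition inv_pow (n : nat) (z : pt) : pt := mpow_apply (minv (companion P Q)) n z.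

Lemma comp_inv_eq z : comp_inv z = ((- P * fst z + Q * snd z) / Q, - fst z / Q).
Proof. unfold comp_inv, minv, mapply, mdet, companion; simpl. f_equal; field; lra. Qed.

Lemma comp_inv_companion z : comp_inv (mapply (companion P Q) z) = z.
Proof. rewrite comp_inv_eq. destruct z as [x y]; unfold mapply, companion; simpl. f_equal; field; auto. Qed.

Lemma companion_comp_inv z : mapply (companion P Q) (comp_inv z) = z.
Proof. rewrite comp_inv_eq. destruct z as [x y]; unfold mapply, companion; simpl. f_equal; field; auto. Qed.

Lemma comp_inv_e2 : comp_inv (0, 1) = (1, 0).
Proof. rewrite comp_inv_eq. simpl. f_equal; field; auto. Qed.

Lemma inv_pow_S n z : inv_pow (S n) z = comp_inv (inv_pow n z).
Proof. reflexivity. Qed.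

Lemma inv_pow_S' n z : inv_pow (S n) z = inv_pow n (comp_inv z).
Proof. apply mpow_S'. Qed.

Lemma inv_pow_rec z :
  backward_rec P Q (fun n => fst (inv_pow n z)) /\ backward_rec P Q (fun n => snd (inv_pow n z)).
Proof.
  assert (H2 : forall w, comp_inv (comp_inv w) = pscale (-1/Q) (padd (pscale P (comp_inv w)) w)).
  { intros [x y]. rewrite !comp_inv_eq. unfold pscale, padd; simpl. f_equal; field; auto. }
  split; intro n; rewrite !inv_pow_S, H2; unfold pscale, padd; cbn [fst snd]; field; auto.
Qed.

Lemma norm1_inv_pow n z : norm1 (inv_pow n z) <= 16 * norm1 z * rho ^ n.
Proof.
  destruct (inv_pow_rec z) as [R1 R2].
  pose proof (backward_rec_decay P Q _ HPQ R1 n) as H1.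
  pose proof (backward_rec_decay P Q _ HPQ R2 n) as H2.
  cbv beta in H1, H2. rewrite inv_pow_S in H1, H2.
  change (inv_pow 0 z) with z in H1, H2. rewrite comp_inv_eq in H1, H2. cbn [fst snd] in H1, H2.
  assert (Hb : Rabs (P / Q) <= 1 /\ Rabs (1 / Q) <= 1).
  { destruct HPQ as [[-> [-> | [-> | ->]]]|[-> ->]]; split; apply Rabs_le; split; lra. }
  destruct Hb as [B1 B2].
  assert (E1 : Rabs ((- P * fst z + Q * snd z) / Q) <= Rabs (fst z) + Rabs (snd z)).
  { replace ((- P * fst z + Q * snd z) / Q) with (- (P / Q) * fst z + snd z) by (field; auto).
    eapply Rle_trans; [apply Rabs_triang|]. rewrite Rabs_mult, Rabs_Ropp.
    pose proof (Rabs_pos (fst z)). nra. }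
  assert (E2 : Rabs (- fst z / Q) <= Rabs (fst z)).
  { replace (- fst z / Q) with (- (1 / Q) * fst z) by (field; auto).
    rewrite Rabs_mult, Rabs_Ropp. pose proof (Rabs_pos (fst z)). nra. }
  pose proof (rho_pow_pos n). unfold norm1.
  pose proof (Rabs_pos (fst z)); pose proof (Rabs_pos (snd z)).
  nra.
Qed.

Lemma inv_pow_padd n x y : inv_pow n (padd x y) = padd (inv_pow n x) (inv_pow n y).
Proof. apply mpow_padd. Qed.
Lemma inv_pow_psub n x y : inv_pow n (psub x y) = psub (inv_pow n x) (inv_pow n y).
Proof. apply mpow_psub. Qed.
Lemma inv_pow_pzero n : inv_pow n pzero = pzero.
Proof. apply mpow_pzero. Qed.
Lemma inv_pow_add m n x : inv_pow m (inv_pow n x) = inv_pow (m + n) x.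
Proof. apply mpow_add. Qed.

End Companion.

(** * Digit expansions for T(B, {0, e1, K e2}) *)

Definition digits (K : R) : list pt := [pzero; (1, 0); (0, K)].

Definition digit_seq (K : R) (dig : nat -> pt) : Prop := forall i, In (dig i) (digits K).
Definition digit_prefix (K : R) (n : nat) (w : nat -> pt) : Prop :=
  forall i, (i < n)%nat -> In (w i) (digits K).

Definition T_K (P Q K : R) : pt -> Prop := self_affine_set (companion P Q) (digits K).

Section Expansions.
Variables P Q K : R.
Hypothesis HPQ : admissible P Q.

Definition expansion (dig : nat -> pt) (n : nat) : pt := partial_sum (companion P Q) dig n.

Definition digit_max : R := 1 + Rabs K.

Lemma digit_max_pos : 0 < digit_max.
Proof. unfold digit_max; pose proof (Rabs_pos K); lra. Qed.

Lemma digits_bound d : In d (digits K) -> norm1 d <= digit_max.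
Proof.
  unfold digits, digit_max, norm1; simpl; intros [<-|[<-|[<-|[]]]]; simpl;
    rewrite ?Rabs_R0, ?Rabs_R1; pose proof (Rabs_pos K); lra.
Qed.

Lemma expansion_S dig n : expansion dig (S n) = padd (expansion dig n) (inv_pow P Q (S n) (dig n)).
Proof. reflexivity. Qed.

Lemma expansion_agree dig dig' n :
  (forall i, (i < n)%nat -> dig i = dig' i) -> expansion dig n = expansion dig' n.
Proof. induction n; intros H; [reflexivity|]. rewrite !expansion_S, IHn, H; auto. Qed.

Lemma expansion_close dig dig' n : digit_seq K dig -> digit_seq K dig' ->
  (forall i, (i < n)%nat -> dig i = dig' i) ->
  forall m, norm1 (psub (expansion dig m) (expansion dig' m)) <= 320 * digit_max * rho ^ n.
Proof.
  intros Hv Hv' Ha.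
  assert (Hterm : forall d m, In d (digits K) -> norm1 (inv_pow P Q m d) <= 16 * digit_max * rho ^ m).
  { intros d m Hd. eapply Rle_trans; [apply norm1_inv_pow; auto|].
    pose proof (digits_bound d Hd). pose proof (rho_pow_pos m). pose proof (norm1_nonneg d). nra. }
  (* the partial sums differ only in terms of index >= n, summed geometrically *)
  assert (H : forall m, norm1 (psub (expansion dig m) (expansion dig' m))
                        <= 320 * digit_max * (rho ^ n - rho ^ (Nat.max n m))).
  { induction m.
    - rewrite Nat.max_0_r. unfold norm1, psub, expansion; simpl.
      rewrite Rminus_diag, Rabs_R0. pose proof digit_max_pos. lra.
    - rewrite !expansion_S. destruct (lt_dec m n) as [Hl|Hl].
      + rewrite (Ha m Hl).
        replace (psub (padd (expansion dig m) (inv_pow P Q (S m) (dig' m)))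
                      (padd (expansion dig' m) (inv_pow P Q (S m) (dig' m))))
          with (psub (expansion dig m) (expansion dig' m))
          by (unfold psub, padd; simpl; f_equal; ring).
        replace (Nat.max n (S m)) with n by lia. replace (Nat.max n m) with n in IHm by lia. exact IHm.
      + eapply Rle_trans; [apply norm1_psub_padd|].
        pose proof (Hterm _ (S m) (Hv m)). pose proof (Hterm _ (S m) (Hv' m)).
        replace (Nat.max n (S m)) with (S m) by lia. replace (Nat.max n m) with m in IHm by lia.
        pose proof digit_max_pos. pose proof (rho_pow_pos m).
        assert (rho ^ S m = 9/10 * rho ^ m) by (simpl; unfold rho; lra).
        nra. }
  intros m. eapply Rle_trans; [apply H|].
  pose proof digit_max_pos. pose proof (rho_pow_pos (Nat.max n m)). nra.
Qed.

Definition truncate (dig : nat -> pt) (N : nat) : nat -> pt :=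
  fun i => if Nat.ltb i N then dig i else pzero.

Lemma truncate_digit_seq dig N : digit_seq K dig -> digit_seq K (truncate dig N).
Proof. intros H i; unfold truncate; destruct (Nat.ltb i N); auto. left; reflexivity. Qed.

Lemma truncate_agree dig N : forall i, (i < N)%nat -> dig i = truncate dig N i.
Proof. intros i Hi; unfold truncate. apply Nat.ltb_lt in Hi; rewrite Hi; auto. Qed.

Lemma expansion_truncate dig N m : (N <= m)%nat -> expansion (truncate dig N) m = expansion dig N.
Proof.
  induction m; intros Hm.
  - replace N with O by lia. reflexivity.
  - destruct (Nat.eq_dec N (S m)) as [->|Hne].
    + apply expansion_agree. intros; symmetry; apply truncate_agree; auto.
    + rewrite expansion_S, IHm by lia. unfold truncate.
      replace (Nat.ltb m N) with false by (symmetry; apply Nat.ltb_ge; lia).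
      rewrite inv_pow_pzero. unfold padd, pzero; simpl. destruct (expansion dig N); simpl; f_equal; ring.
Qed.

Lemma expansion_cauchy (f : pt -> R) dig :
  (forall x y, Rabs (f x - f y) <= norm1 (psub x y)) -> digit_seq K dig ->
  Cauchy_crit (fun n => f (expansion dig n)).
Proof.
  intros Hf Hv eps He.
  pose proof digit_max_pos.
  destruct (rho_pow_small (eps / (640 * digit_max + 1))) as [N HN]; [apply Rdiv_lt_0_compat; lra|].
  specialize (HN N (le_n N)).
  exists N. intros n m Hn Hm. unfold R_dist.
  assert (Hb : forall k, (k >= N)%nat -> Rabs (f (expansion dig k) - f (expansion dig N))
                                          <= 320 * digit_max * rho ^ N).
  { intros k Hk. rewrite <- (expansion_truncate dig N k) by lia.
    eapply Rle_trans; [apply Hf|]. apply expansion_close; auto.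
    apply truncate_digit_seq; auto. apply truncate_agree. }
  pose proof (Hb n Hn); pose proof (Hb m Hm). pose proof (rho_pow_pos N).
  apply (Rmult_lt_compat_r (640 * digit_max + 1)) in HN; [|lra].
  unfold Rdiv in HN. rewrite Rmult_assoc, Rinv_l, Rmult_1_r in HN by lra.
  replace (f (expansion dig n) - f (expansion dig m))
    with ((f (expansion dig n) - f (expansion dig N)) - (f (expansion dig m) - f (expansion dig N)))
    by ring.
  eapply Rle_lt_trans; [apply Rabs_triang|]. rewrite Rabs_Ropp. nra.
Qed.

Lemma expansion_converges dig : digit_seq K dig -> exists x, pt_lim (expansion dig) x.
Proof.
  intros Hv.
  assert (Hfst : forall x y, Rabs (fst x - fst y) <= norm1 (psub x y)).
  { intros x y; unfold norm1, psub; simpl; pose proof (Rabs_pos (snd x - snd y)); lra. }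
  assert (Hsnd : forall x y, Rabs (snd x - snd y) <= norm1 (psub x y)).
  { intros x y; unfold norm1, psub; simpl; pose proof (Rabs_pos (fst x - fst y)); lra. }
  destruct (R_complete _ (expansion_cauchy fst dig Hfst Hv)) as [l1 H1].
  destruct (R_complete _ (expansion_cauchy snd dig Hsnd Hv)) as [l2 H2].
  exists (l1, l2); split; auto.
Qed.

Definition cylinder (n : nat) (w : nat -> pt) (x : pt) : Prop :=
  exists dig, digit_seq K dig /\ (forall i, (i < n)%nat -> dig i = w i) /\ pt_lim (expansion dig) x.

Definition extend (w : nat -> pt) (n : nat) (d : pt) : nat -> pt :=
  fun i => if Nat.eqb i n then d else w i.

Lemma extend_prefix n w d : digit_prefix K n w -> In d (digits K) -> digit_prefix K (S n) (extend w n d).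
Proof. intros Hw Hd i Hi. unfold extend. destruct (Nat.eqb_spec i n); auto. apply Hw; lia. Qed.

Lemma cylinder_T n w x : cylinder n w x -> T_K P Q K x.
Proof. intros [dig [Hv [_ Hc]]]. exists dig. split; auto. Qed.

Lemma T_cylinder0 w x : T_K P Q K x -> cylinder 0 w x.
Proof. intros [dig [Hv Hc]]. exists dig. repeat split; try apply Hc; auto. intros; lia. Qed.

Lemma cylinder_child n w x : cylinder n w x ->
  exists d, In d (digits K) /\ cylinder (S n) (extend w n d) x.
Proof.
  intros [dig [Hv [Ha Hc]]]. exists (dig n). split; auto. exists dig. split; auto. split; [|exact Hc].
  intros i Hi. unfold extend. destruct (Nat.eqb_spec i n); [subst; auto|]. apply Ha; lia.
Qed.

Lemma cylinder_nonempty n w : digit_prefix K n w -> exists x, cylinder n w x.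
Proof.
  intros Hw. set (dig := fun i => if Nat.ltb i n then w i else pzero).
  assert (Hv : digit_seq K dig).
  { intros i; unfold dig. destruct (Nat.ltb_spec i n); auto. left; reflexivity. }
  destruct (expansion_converges dig Hv) as [x Hx]. exists x, dig. split; auto. split; [|exact Hx].
  intros i Hi; unfold dig. destruct (Nat.ltb_spec i n); auto; lia.
Qed.

Lemma cylinder_diam n w x y : cylinder n w x -> cylinder n w y ->
  dist2 x y <= 640 * digit_max * rho ^ n.
Proof.
  intros [dig [Hv [Ha Hc]]] [dig' [Hv' [Ha' Hc']]].
  assert (Hb := expansion_close dig dig' n Hv Hv' (fun i Hi => eq_trans (Ha i Hi) (eq_sym (Ha' i Hi)))).
  destruct Hc as [H1 H2]; destruct Hc' as [H3 H4].
  assert (B1 : Rabs (fst x - fst y) <= 320 * digit_max * rho ^ n).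
  { apply (Un_cv_abs_bound _ _ _ (CV_minus _ _ _ _ H1 H3)). intros m. eapply Rle_trans; [|apply (Hb m)].
    unfold norm1, psub; simpl. pose proof (Rabs_pos (snd (expansion dig m) - snd (expansion dig' m))). lra. }
  assert (B2 : Rabs (snd x - snd y) <= 320 * digit_max * rho ^ n).
  { apply (Un_cv_abs_bound _ _ _ (CV_minus _ _ _ _ H2 H4)). intros m. eapply Rle_trans; [|apply (Hb m)].
    unfold norm1, psub; simpl. pose proof (Rabs_pos (fst (expansion dig m) - fst (expansion dig' m))). lra. }
  eapply Rle_trans; [apply dist2_le_norm1|]. unfold norm1, psub; simpl. lra.
Qed.

Definition concat (w : nat -> pt) (n : nat) (d : pt) (s : nat -> pt) : nat -> pt :=
  fun i => if Nat.ltb i n then w i else if Nat.eqb i n then d else s (i - S n)%nat.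

Lemma concat_digit_seq w n d s :
  digit_prefix K n w -> In d (digits K) -> digit_seq K s -> digit_seq K (concat w n d s).
Proof.
  intros Hw Hd Hs i. unfold concat. destruct (Nat.ltb_spec i n); auto. destruct (Nat.eqb i n); auto.
Qed.

Lemma concat_prefix w n d s i : (i < S n)%nat -> concat w n d s i = extend w n d i.
Proof. intros Hi. unfold concat, extend. destruct (Nat.ltb_spec i n); destruct (Nat.eqb_spec i n); auto; lia. Qed.

Lemma expansion_concat w n d s j :
  expansion (concat w n d s) (S n + j) = padd (expansion w n) (inv_pow P Q (S n) (padd d (expansion s j))).
Proof.
  induction j.
  - rewrite Nat.add_0_r, expansion_S.
    rewrite (expansion_agree (concat w n d s) w n).
    2:{ intros i Hi; unfold concat. destruct (Nat.ltb_spec i n); auto; lia. }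
    unfold concat. rewrite (proj2 (Nat.ltb_ge n n)), Nat.eqb_refl by lia.
    f_equal. f_equal. destruct d as [d1 d2]. unfold expansion, padd, pzero; simpl; f_equal; ring.
  - replace (S n + S j)%nat with (S (S n + j)) by lia. rewrite expansion_S, IHj, (expansion_S s j).
    unfold concat.
    rewrite (proj2 (Nat.ltb_ge (S n + j) n)) by lia.
    replace (Nat.eqb (S n + j) n) with false by (symmetry; apply Nat.eqb_neq; lia).
    replace (S n + j - S n)%nat with j by lia.
    rewrite !inv_pow_padd, (inv_pow_add P Q (S n) (S j)).
    replace (S n + S j)%nat with (S (S n + j)) by lia.
    unfold padd; simpl; f_equal; ring.
Qed.

Lemma concat_lim w n d s t : pt_lim (expansion s) t ->
  pt_lim (expansion (concat w n d s)) (padd (expansion w n) (inv_pow P Q (S n) (padd d t))).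
Proof.
  intros Hc. apply (pt_lim_shift _ _ (S n)).
  eapply pt_lim_ext; [intros j; symmetry; apply expansion_concat|].
  apply pt_lim_padd; [apply pt_lim_const|]. apply pt_lim_mpow. apply pt_lim_padd; [apply pt_lim_const|auto].
Qed.

(* The translates d + T_K and d' + T_K intersect. *)
Definition neighbours (d d' : pt) : Prop :=
  exists s s', digit_seq K s /\ digit_seq K s' /\
    forall t t', pt_lim (expansion s) t -> pt_lim (expansion s') t' -> padd d t = padd d' t'.

Lemma neighbour_children_meet n w d d' :
  digit_prefix K n w -> In d (digits K) -> In d' (digits K) -> neighbours d d' ->
  exists z, cylinder (S n) (extend w n d) z /\ cylinder (S n) (extend w n d') z.
Proof.
  intros Hw Hd Hd' [s [s' [Hs [Hs' Heq]]]].
  destruct (expansion_converges s Hs) as [t Ht]. destruct (expansion_converges s' Hs') as [t' Ht'].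
  exists (padd (expansion w n) (inv_pow P Q (S n) (padd d t))). split.
  - exists (concat w n d s). split; [apply concat_digit_seq; auto|]. split; [|apply concat_lim; auto].
    apply concat_prefix.
  - exists (concat w n d' s'). split; [apply concat_digit_seq; auto|].
    split; [apply concat_prefix|]. rewrite (Heq t t' Ht Ht'). apply concat_lim; auto.
Qed.

(* If y(n+1) = B y(n) - (s(n) - s'(n)) along a bounded orbit, then
   x(s) - x(s') = y(0): the partial sums differ by y(0) - B^{-m} y(m). *)
Lemma expansion_diff_orbit s s' (y : nat -> pt) :
  (forall n, y (S n) = psub (mapply (companion P Q) (y n)) (psub (s n) (s' n))) ->
  forall m, psub (expansion s m) (expansion s' m) = psub (y O) (inv_pow P Q m (y m)).
Proof.
  intros Hy. induction m.
  - unfold expansion, psub; simpl. f_equal; ring.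
  - rewrite !expansion_S, Hy, inv_pow_psub, (inv_pow_S' P Q m (mapply _ _)), comp_inv_companion,
      inv_pow_psub by auto.
    revert IHm. unfold padd, psub. cbn [fst snd]. intro H.
    injection H as H1 H2. f_equal; lra.
Qed.

Lemma inv_pow_bounded_vanish (y : nat -> pt) Y : (forall n, norm1 (y n) <= Y) ->
  pt_lim (fun m => inv_pow P Q m (y m)) pzero.
Proof.
  intros HY.
  assert (Hz : forall f : pt -> R, (forall x, Rabs (f x) <= norm1 x) ->
            Un_cv (fun m => f (inv_pow P Q m (y m))) 0).
  { intros f Hf e He. pose proof (Rabs_pos Y).
    destruct (rho_pow_small (e / (16 * Rabs Y + 1))) as [N HN]; [apply Rdiv_lt_0_compat; lra|].
    exists N. intros m Hm. unfold R_dist. rewrite Rminus_0_r. specialize (HN m Hm).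
    pose proof (Hf (inv_pow P Q m (y m))). pose proof (norm1_inv_pow P Q HPQ m (y m)).
    pose proof (HY m). pose proof (Rle_abs Y). pose proof (rho_pow_pos m). pose proof (norm1_nonneg (y m)).
    apply (Rmult_lt_compat_r (16 * Rabs Y + 1)) in HN; [|lra].
    unfold Rdiv in HN. rewrite Rmult_assoc, Rinv_l, Rmult_1_r in HN by lra.
    nra. }
  split; apply Hz; intros x; unfold norm1; [pose proof (Rabs_pos (snd x))|pose proof (Rabs_pos (fst x))]; lra.
Qed.

Lemma neighbours_of_orbit d d' s s' (y : nat -> pt) Y :
  digit_seq K s -> digit_seq K s' -> (forall n, norm1 (y n) <= Y) ->
  (forall n, y (S n) = psub (mapply (companion P Q) (y n)) (psub (s n) (s' n))) ->
  y O = psub d' d -> neighbours d d'.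
Proof.
  intros Hs Hs' HY Hy Hy0. exists s, s'. repeat split; auto. intros t t' Ht Ht'.
  assert (Hlim : pt_lim (fun m => psub (expansion s m) (expansion s' m)) (psub (y O) pzero)).
  { eapply pt_lim_ext; [intros m; symmetry; apply (expansion_diff_orbit s s' y Hy)|].
    destruct (inv_pow_bounded_vanish y Y HY) as [H1 H2].
    split; simpl; apply CV_minus; auto; apply Un_cv_const. }
  assert (Hlim' : pt_lim (fun m => psub (expansion s m) (expansion s' m)) (psub t t')).
  { destruct Ht as [H1 H2], Ht' as [H3 H4]. split; simpl; apply CV_minus; auto. }
  pose proof (pt_lim_unique _ _ _ Hlim Hlim') as E. rewrite Hy0 in E.
  unfold psub, padd, pzero in *. simpl in E. injection E as E1 E2. f_equal; lra.
Qed.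

End Expansions.

(** * Reduction to the normal form T_K *)

(* In the basis (v, Av) the matrix A is the companion matrix of its
   characteristic polynomial and the digits 0, v, k Av become 0, e1, k e2. *)
Section NormalForm.
Variables a b c d p q k : Z.
Variable v : pt.
Let A := matZ a b c d.
Let P := IZR p.
Let Q := IZR q.
Let K := IZR k.
Hypothesis Hp : (- (a + d))%Z = p.
Hypothesis Hq : (a * d - b * c)%Z = q.
Hypothesis HPQ : admissible P Q.
Hypothesis Hindep : lin_indep2 v (mapply A v).

Let L := Mat2 (fst v) (fst (mapply A v)) (snd v) (snd (mapply A v)).

Lemma basis_det : mdet L <> 0.
Proof. unfold mdet, L; cbn [m11 m12 m21 m22]. apply lin_indep2_det; auto. Qed.

Lemma matZ_det : mdet A <> 0.
Proof.
  unfold mdet, A, matZ; simpl. rewrite <- !mult_IZR, <- minus_IZR, Hq.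
  apply (admissible_Q_neq_0 P Q HPQ).
Qed.

Lemma basis_conjugates z : mapply A (mapply L z) = mapply L (mapply (companion P Q) z).
Proof.
  assert (EP : P = - (IZR a + IZR d)) by (unfold P; rewrite <- Hp, opp_IZR, plus_IZR; reflexivity).
  assert (EQ : Q = IZR a * IZR d - IZR b * IZR c)
    by (unfold Q; rewrite <- Hq, minus_IZR, !mult_IZR; reflexivity).
  unfold L, A, companion, mapply, matZ; simpl. rewrite EP, EQ. destruct v, z; simpl; f_equal; ring.
Qed.

Lemma basis_conjugates_inv_pow n z :
  mpow_apply (minv A) n (mapply L z) = mapply L (inv_pow P Q n z).
Proof.
  induction n; [reflexivity|]. simpl. rewrite IHn.
  rewrite <- (companion_comp_inv P Q HPQ (inv_pow P Q n z)) at 1.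
  rewrite <- basis_conjugates. apply minv_l, matZ_det.
Qed.

Lemma basis_partial_sum dig n :
  partial_sum A (fun i => mapply L (dig i)) n = mapply L (expansion P Q dig n).
Proof.
  induction n.
  - simpl. symmetry; apply mapply_pzero.
  - cbn [partial_sum]. rewrite IHn, basis_conjugates_inv_pow, expansion_S, mapply_padd. reflexivity.
Qed.

Lemma basis_digits :
  mapply L pzero = pzero /\ mapply L (1, 0) = v /\ mapply L (0, K) = pscale K (mapply A v).
Proof. unfold L, mapply, pzero, pscale; simpl; repeat split; destruct v; simpl; f_equal; ring. Qed.

Lemma self_affine_normal_form x :
  self_affine_set A [pzero; v; pscale K (mapply A v)] x <-> T_K P Q K (mapply (minv L) x).
Proof.
  destruct basis_digits as [D0 [D1 D2]].
  assert (LLi : forall y, mapply L (mapply (minv L) y) = y) by (intro; apply minv_r, basis_det).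
  assert (LiL : forall y, mapply (minv L) (mapply L y) = y) by (intro; apply minv_l, basis_det).
  split.
  - intros [dig [Hin Hcv]]. exists (fun i => mapply (minv L) (dig i)). split.
    + intros i. destruct (Hin i) as [E|[E|[E|[]]]]; rewrite <- E; simpl.
      * left. rewrite mapply_pzero. reflexivity.
      * right; left. rewrite <- D1 at 1. rewrite LiL. reflexivity.
      * right; right; left. rewrite <- D2 at 1. rewrite LiL. reflexivity.
    + apply (pt_lim_ext (fun n => mapply (minv L) (partial_sum A dig n))).
      * intros n. rewrite (partial_sum_ext A dig (fun i => mapply L (mapply (minv L) (dig i)))) by auto.
        fold (expansion P Q (fun i => mapply (minv L) (dig i)) n).
        rewrite basis_partial_sum, LiL. reflexivity.
      * apply pt_lim_mapply. exact Hcv.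
  - intros [dig [Hin Hcv]]. exists (fun i => mapply L (dig i)). split.
    + intros i. destruct (Hin i) as [E|[E|[E|[]]]]; rewrite <- E; simpl; auto.
    + rewrite <- (LLi x). apply (pt_lim_ext (fun n => mapply L (expansion P Q dig n))).
      * intros n. symmetry; apply basis_partial_sum.
      * apply pt_lim_mapply. exact Hcv.
Qed.

Lemma connected_normal_form :
  connected2 (self_affine_set A [pzero; v; pscale K (mapply A v)]) <-> connected2 (T_K P Q K).
Proof.
  apply (connected2_linear_iso _ _ L (minv L)).
  - intro; apply minv_r, basis_det.
  - intro; apply minv_l, basis_det.
  - apply self_affine_normal_form.
Qed.

End NormalForm.

(** * Connectedness from neighbouring digits *)

Section ConnectedCriterion.
Variables P Q K : R.
Hypothesis HPQ : admissible P Q.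

Lemma cylinder_agree n w w' x : (forall i, (i < n)%nat -> w i = w' i) ->
  cylinder P Q K n w x -> cylinder P Q K n w' x.
Proof.
  intros Hw [dig [Hv [Ha Hc]]]. exists dig. split; [auto|split; [|exact Hc]].
  intros i Hi. rewrite Ha, Hw; auto.
Qed.

(* A hypothetical splitting of T_K into two disjoint parts covering it;
   openness is only used at the very end. *)
Section Splitting.
Variables U V : pt -> Prop.
Hypothesis Hcover : forall x, T_K P Q K x -> U x \/ V x.
Hypothesis Hdisj : forall x, T_K P Q K x -> U x -> V x -> False.

Definition mixed (n : nat) (w : nat -> pt) : Prop :=
  (exists x, cylinder P Q K n w x /\ U x) /\ (exists y, cylinder P Q K n w y /\ V y).

Definition inside (W : pt -> Prop) (n : nat) (w : nat -> pt) : Prop :=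
  forall x, cylinder P Q K n w x -> W x.

Lemma unmixed_inside n w : digit_prefix K n w -> ~ mixed n w -> inside U n w \/ inside V n w.
Proof.
  intros Hw Hm. destruct (cylinder_nonempty P Q K HPQ n w Hw) as [x0 Hx0].
  destruct (Hcover x0 (cylinder_T _ _ _ _ _ _ Hx0)) as [Ux0|Vx0].
  - left. intros x Hx. destruct (Hcover x (cylinder_T _ _ _ _ _ _ Hx)) as [|Vx]; auto.
    exfalso; apply Hm. split; eauto.
  - right. intros x Hx. destruct (Hcover x (cylinder_T _ _ _ _ _ _ Hx)) as [Ux|]; auto.
    exfalso; apply Hm. split; eauto.
Qed.

Lemma neighbour_children_same_side n w d d' :
  digit_prefix K n w -> In d (digits K) -> In d' (digits K) -> neighbours P Q K d d' ->
  inside U (S n) (extend w n d) -> inside V (S n) (extend w n d') -> False.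
Proof.
  intros Hw Hd Hd' Hn H1 H2.
  destruct (neighbour_children_meet P Q K HPQ n w d d' Hw Hd Hd' Hn) as [z [Hz1 Hz2]].
  apply (Hdisj z (cylinder_T _ _ _ _ _ _ Hz1)); auto.
Qed.

Hypothesis N01 : neighbours P Q K pzero (1, 0).
Hypothesis N2 : neighbours P Q K pzero (0, K) \/ neighbours P Q K (1, 0) (0, K).

(* Since the neighbour graph on the three digits is connected, a mixed
   cylinder has a mixed child. *)
Lemma mixed_child n w : digit_prefix K n w -> mixed n w ->
  exists d, In d (digits K) /\ mixed (S n) (extend w n d).
Proof.
  intros Hw Hm. apply NNPP. intros Hno.
  assert (Hpure : forall d, In d (digits K) ->
                   inside U (S n) (extend w n d) \/ inside V (S n) (extend w n d)).
  { intros d Hd. apply unmixed_inside; [apply extend_prefix; auto|]. intros Hm'; apply Hno; eauto. }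
  assert (I0 : In pzero (digits K)) by (left; reflexivity).
  assert (I1 : In (1, 0) (digits K)) by (right; left; reflexivity).
  assert (I2 : In (0, K) (digits K)) by (right; right; left; reflexivity).
  assert (Hsame : forall d d', In d (digits K) -> In d' (digits K) -> neighbours P Q K d d' ->
            (inside U (S n) (extend w n d) -> inside V (S n) (extend w n d') -> False) /\
            (inside V (S n) (extend w n d) -> inside U (S n) (extend w n d') -> False)).
  { intros d d' Hd Hd' Hn. split.
    - apply neighbour_children_same_side; auto.
    - intros H1 H2. apply (neighbour_children_same_side n w d' d); auto.
      destruct Hn as [s [s' [Hs [Hs' He]]]]. exists s', s. repeat split; auto.
      intros t t' Ht Ht'. symmetry; auto. }
  assert (Hall : (forall d, In d (digits K) -> inside U (S n) (extend w n d)) \/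
                 (forall d, In d (digits K) -> inside V (S n) (extend w n d))).
  { destruct (Hpure _ I0) as [P0|P0]; destruct (Hpure _ I1) as [P1|P1]; destruct (Hpure _ I2) as [P2|P2];
      try (exfalso; destruct (Hsame _ _ I0 I1 N01); tauto);
      try (exfalso; destruct N2 as [E|E];
           [destruct (Hsame _ _ I0 I2 E)|destruct (Hsame _ _ I1 I2 E)]; tauto);
      [left|right]; intros d Hd; destruct Hd as [<-|[<-|[<-|[]]]]; auto. }
  destruct Hm as [[x [Hx Ux]] [y [Hy Vy]]]. destruct Hall as [AU|AV].
  - destruct (cylinder_child _ _ _ _ _ _ Hy) as [d [Hd Hy']].
    apply (Hdisj y (cylinder_T _ _ _ _ _ _ Hy)); auto. eapply AU; eauto.
  - destruct (cylinder_child _ _ _ _ _ _ Hx) as [d [Hd Hx']].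
    apply (Hdisj x (cylinder_T _ _ _ _ _ _ Hx)); auto. eapply AV; eauto.
Qed.

Lemma mixed_digit_seq : mixed 0 (fun _ => pzero) ->
  exists dig, digit_seq K dig /\ forall n, mixed n dig.
Proof.
  intros H0.
  assert (Hchoice : forall n w, exists d,
             digit_prefix K n w /\ mixed n w -> In d (digits K) /\ mixed (S n) (extend w n d)).
  { intros n w. destruct (classic (digit_prefix K n w /\ mixed n w)) as [[H1 H2]|H].
    - destruct (mixed_child n w H1 H2) as [d Hd]. exists d; auto.
    - exists pzero. intros; contradiction. }
  set (ch := fun n w => proj1_sig (constructive_indefinite_description _ (Hchoice n w))).
  assert (Hch : forall n w, digit_prefix K n w -> mixed n w ->
                 In (ch n w) (digits K) /\ mixed (S n) (extend w n (ch n w))).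
  { intros n w H1 H2. unfold ch. destruct (constructive_indefinite_description _ (Hchoice n w)); simpl; auto. }
  set (W := fix W (n : nat) : nat -> pt :=
              match n with O => fun _ => pzero | S m => extend (W m) m (ch m (W m)) end).
  assert (Inv : forall n, digit_prefix K n (W n) /\ mixed n (W n)).
  { induction n.
    - split; [intros i Hi; lia|exact H0].
    - destruct IHn as [H1 H2]. destruct (Hch n (W n) H1 H2) as [H3 H4].
      split; [apply extend_prefix; auto|exact H4]. }
  set (dig := fun i => W (S i) i).
  assert (Stable : forall m i, (i < m)%nat -> W m i = dig i).
  { induction m; intros i Hi; [lia|]. unfold dig. simpl. unfold extend.
    destruct (Nat.eqb_spec i m) as [->|Hne].
    - simpl. unfold extend. rewrite Nat.eqb_refl. reflexivity.
    - rewrite IHm by lia. unfold dig. simpl. unfold extend. rewrite Nat.eqb_refl. reflexivity. }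
  exists dig. split.
  - intros i. unfold dig. apply (proj1 (Inv (S i))). lia.
  - intros n. destruct (Inv n) as [_ [[x [Hx Ux]] [y [Hy Vy]]]].
    split; [exists x|exists y]; split; auto; apply (cylinder_agree n (W n)); auto.
Qed.

End Splitting.

Theorem connected_of_neighbours :
  neighbours P Q K pzero (1, 0) ->
  neighbours P Q K pzero (0, K) \/ neighbours P Q K (1, 0) (0, K) ->
  connected2 (T_K P Q K).
Proof.
  intros N01 N2 [U [V [HU [HV [Hcov [[a [Ha Ua]] [[b [Hb Vb]] Hdis]]]]]]].
  destruct (mixed_digit_seq U V Hcov Hdis N01 N2) as [dig [Hv Hmixed]].
  { split; [exists a|exists b]; split; auto; apply T_cylinder0; auto. }
  destruct (expansion_converges P Q K HPQ dig Hv) as [x Hx].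
  assert (Hcyl : forall n, cylinder P Q K n dig x) by (intros n; exists dig; auto).
  assert (Tx : T_K P Q K x) by (apply (cylinder_T _ _ _ _ _ _ (Hcyl O))).
  (* the cylinders around x shrink into any neighbourhood of x *)
  assert (Hsmall : forall e, 0 < e -> exists n, 640 * digit_max K * rho ^ n < e).
  { intros e He. pose proof (digit_max_pos K).
    destruct (rho_pow_small (e / (640 * digit_max K))) as [N HN]; [apply Rdiv_lt_0_compat; lra|].
    exists N. specialize (HN N (le_n N)).
    apply (Rmult_lt_compat_l (640 * digit_max K)) in HN; [|lra].
    replace (640 * digit_max K * (e / (640 * digit_max K))) with e in HN by (field; lra). lra. }
  destruct (Hcov x Tx) as [Ux|Vx].
  - destruct (HU x Ux) as [e [He Hball]]. destruct (Hsmall e He) as [n Hn].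
    destruct (Hmixed n) as [_ [y [Hy Vy]]].
    apply (Hdis y (cylinder_T _ _ _ _ _ _ Hy)); auto. apply Hball.
    pose proof (cylinder_diam P Q K HPQ n dig x y (Hcyl n) Hy). lra.
  - destruct (HV x Vx) as [e [He Hball]]. destruct (Hsmall e He) as [n Hn].
    destruct (Hmixed n) as [[y [Hy Uy]] _].
    apply (Hdis y (cylinder_T _ _ _ _ _ _ Hy)); auto. apply Hball.
    pose proof (cylinder_diam P Q K HPQ n dig x y (Hcyl n) Hy). lra.
Qed.

End ConnectedCriterion.

(** * Neighbour cycles: explicit intersections of translates *)

(* A finite automaton certifying [neighbours d d']: state i carries the
   digits (left, right) emitted by the two expansions, the current offset y
   and the index of the next state; offsets must follow
   y' = B y - (left - right), starting from d' - d.  Since there are finitely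
   many states the orbit of offsets is bounded. *)
Record nb_state : Type := NbState {
  st_left : pt; st_right : pt; st_offset : pt; st_next : nat }.

Definition nb_default : nb_state := NbState pzero pzero pzero 0.

Definition nb_cycle (P Q K : R) (c : list nb_state) : Prop :=
  Forall (fun st =>
    In (st_left st) (digits K) /\ In (st_right st) (digits K) /\ (st_next st < length c)%nat /\
    st_offset (nth (st_next st) c nb_default) =
      psub (mapply (companion P Q) (st_offset st)) (psub (st_left st) (st_right st))) c.

Lemma nth_offset_bound (c : list nb_state) i : (i < length c)%nat ->
  norm1 (st_offset (nth i c nb_default)) <= fold_right (fun st acc => norm1 (st_offset st) + acc) 0 c.
Proof.
  revert i. induction c as [|st c IH]; intros i Hi; simpl in *; [lia|].
  assert (0 <= fold_right (fun st acc => norm1 (st_offset st) + acc) 0 c).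
  { clear IH Hi. induction c; simpl; [lra|]. pose proof (norm1_nonneg (st_offset a)); lra. }
  pose proof (norm1_nonneg (st_offset st)).
  destruct i as [|i]; [lra|]. specialize (IH i ltac:(lia)). lra.
Qed.

Lemma neighbours_of_cycle P Q K d d' c : admissible P Q -> c <> [] -> nb_cycle P Q K c ->
  st_offset (nth 0 c nb_default) = psub d' d -> neighbours P Q K d d'.
Proof.
  intros HPQ Hne Hc H0.
  set (state := fun n => Nat.iter n (fun i => st_next (nth i c nb_default)) 0%nat).
  set (at_state := fun n => nth (state n) c nb_default).
  assert (Hok : forall i, (i < length c)%nat ->
    let st := nth i c nb_default in
    In (st_left st) (digits K) /\ In (st_right st) (digits K) /\ (st_next st < length c)%nat /\
    st_offset (nth (st_next st) c nb_default) =
      psub (mapply (companion P Q) (st_offset st)) (psub (st_left st) (st_right st))).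
  { intros i Hi. unfold nb_cycle in Hc. rewrite Forall_forall in Hc. apply Hc, nth_In; auto. }
  assert (Hlt : forall n, (state n < length c)%nat).
  { induction n; simpl.
    - destruct c; [congruence|simpl; lia].
    - apply (Hok _ IHn). }
  apply (neighbours_of_orbit P Q K HPQ d d' (fun n => st_left (at_state n)) (fun n => st_right (at_state n))
           (fun n => st_offset (at_state n)) (fold_right (fun st acc => norm1 (st_offset st) + acc) 0 c)).
  - intros n. apply (Hok _ (Hlt n)).
  - intros n. apply (Hok _ (Hlt n)).
  - intros n. apply nth_offset_bound, Hlt.
  - intros n. apply (Hok _ (Hlt n)).
  - exact H0.
Qed.

Ltac check_digit :=
  cbn [In digits]; first [left; reflexivity | right; left; reflexivity | right; right; left; reflexivity].
Ltac check_nb_cycle :=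
  unfold nb_cycle;
  repeat (apply Forall_cons;
          [ cbn [st_left st_right st_offset st_next nth length];
            split; [check_digit | split; [check_digit | split; [lia |
              unfold psub, mapply, companion, pzero; cbn [fst snd m11 m12 m21 m22]; f_equal; ring]]]
          | ]);
  apply Forall_nil.

Ltac apply_nb_cycle c :=
  apply (neighbours_of_cycle _ _ _ _ _ c);
  [ assumption | discriminate | check_nb_cycle | unfold psub, pzero; simpl; f_equal; ring ].

Lemma neighbours_zero_e1 P Q K : admissible P Q -> K = 1 \/ K = -1 ->
  neighbours P Q K pzero (1, 0).
Proof.
  intros HPQ [-> | ->].
  - apply_nb_cycle [NbState (0, 1) (1, 0) (1, 0) 0].
  - apply_nb_cycle [NbState pzero (0, -1) (1, 0) 1; NbState pzero pzero pzero 1].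
Qed.

Lemma neighbours_e2 P Q K : admissible P Q -> K = 1 \/ K = -1 ->
  neighbours P Q K pzero (0, K) \/ neighbours P Q K (1, 0) (0, K).
Proof.
  intros HPQ HK. pose proof HPQ as Hcases.
  destruct Hcases as [[-> [-> | [-> | ->]]] | [-> ->]]; destruct HK as [-> | ->].
  -
    left. apply_nb_cycle [NbState pzero (1, 0) (0, 1) 1; NbState (1, 0) (0, 1) (-2, -1) 2;
                          NbState (0, 1) pzero (2, 0) 0].
  -
    right. apply_nb_cycle [NbState (1, 0) pzero (-1, -1) 1; NbState pzero (0, -1) (2, 0) 2;
                           NbState (0, -1) (1, 0) (0, 1) 3; NbState (0, -1) pzero (-2, 0) 4;
                           NbState (1, 0) (0, -1) (0, -1) 1].
  -
    left. apply_nb_cycle [NbState pzero (0, 1) (0, 1) 1; NbState (1, 0) (0, 1) (-3, -1) 2;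
                          NbState (0, 1) pzero (2, 0) 0].
  -
    right. apply_nb_cycle [NbState (1, 0) pzero (-1, -1) 1; NbState pzero (1, 0) (2, 1) 2;
                           NbState (0, -1) pzero (-2, 0) 3; NbState (1, 0) (0, -1) (0, -1) 1].
  -
    left. apply_nb_cycle [NbState (1, 0) (0, 1) (0, 1) 1; NbState (1, 0) pzero (-4, -2) 2;
                          NbState (0, 1) (1, 0) (5, 2) 3; NbState (1, 0) (0, 1) (-5, -2) 2].
  -
    right. apply_nb_cycle [NbState pzero (0, -1) (-1, -1) 1; NbState pzero (0, -1) (3, 1) 2;
                           NbState (0, -1) pzero (-3, -1) 1].
  -
    left. apply_nb_cycle [NbState (1, 0) (0, 1) (0, 1) 1; NbState (0, 1) pzero (2, 0) 0].
  -
    right. apply_nb_cycle [NbState pzero (0, -1) (-1, -1) 1; NbState (0, -1) pzero (-3, -1) 1].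
Qed.

Theorem T_K_connected P Q K : admissible P Q -> K = 1 \/ K = -1 -> connected2 (T_K P Q K).
Proof.
  intros HPQ HK. apply connected_of_neighbours; auto.
  - apply neighbours_zero_e1; auto.
  - apply neighbours_e2; auto.
Qed.

Fixpoint rsum (f : nat -> R) (n : nat) : R :=
  match n with O => 0 | S m => rsum f m + f m end.

Lemma rsum_le f g n : (forall i, (i < n)%nat -> f i <= g i) -> rsum f n <= rsum g n.
Proof.
  induction n; simpl; intros H; [lra|].
  pose proof (H n ltac:(lia)). pose proof (IHn (fun i Hi => H i ltac:(lia))). lra.
Qed.
Lemma rsum_ext f g n : (forall i, (i < n)%nat -> f i = g i) -> rsum f n = rsum g n.
Proof.
  induction n; simpl; intros H; [lra|].
  rewrite (H n ltac:(lia)), (IHn (fun i Hi => H i ltac:(lia))). lra.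
Qed.
Lemma rsum_nonneg f n : (forall i, 0 <= f i) -> 0 <= rsum f n.
Proof. induction n; simpl; intros H; [lra|]. pose proof (H n). pose proof (IHn H). lra. Qed.
Lemma rsum_plus f g n : rsum (fun i => f i + g i) n = rsum f n + rsum g n.
Proof. induction n; simpl; [lra|]. rewrite IHn; lra. Qed.
Lemma rsum_scal c f n : rsum (fun i => c * f i) n = c * rsum f n.
Proof. induction n; simpl; [lra|]. rewrite IHn; lra. Qed.
Lemma rsum_opp f n : rsum (fun i => - f i) n = - rsum f n.
Proof. induction n; simpl; [lra|]. rewrite IHn; lra. Qed.
Lemma rsum_shift1 f n : rsum f (S n) = f O + rsum (fun i => f (S i)) n.
Proof. induction n; simpl in *; [lra|]. rewrite IHn; lra. Qed.
Lemma rsum_split f J M : rsum f (J + M) = rsum f J + rsum (fun j => f (J + j)%nat) M.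
Proof. induction M; simpl; [rewrite Nat.add_0_r; lra|]. rewrite Nat.add_succ_r; simpl. rewrite IHM; lra. Qed.

Lemma geom_sum_rho M : rsum (fun j => rho ^ j) M = 10 * (1 - rho ^ M).
Proof. induction M; simpl; [lra|]. rewrite IHM. unfold rho; lra. Qed.

Lemma partial_sum_upper (x hi : nat -> R) J C :
  (forall i, x i <= hi i) -> (forall i, 0 <= hi i) ->
  (forall M, rsum (fun j => hi (J + j)%nat) M <= C) ->
  forall N, rsum x N <= rsum hi J + C.
Proof.
  intros Hx Hpos Htail N. apply Rle_trans with (rsum hi N); [apply rsum_le; intros; apply Hx|].
  destruct (le_lt_dec N J).
  - replace J with (N + (J - N))%nat by lia. rewrite rsum_split.
    pose proof (rsum_nonneg (fun j => hi (N + j)%nat) (J - N) (fun j => Hpos _)).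
    specialize (Htail O); simpl in Htail. lra.
  - replace N with (J + (N - J))%nat by lia. rewrite rsum_split. pose proof (Htail (N - J)%nat). lra.
Qed.

Lemma partial_sum_lower (x lo : nat -> R) J C :
  (forall i, lo i <= x i) -> (forall i, lo i <= 0) ->
  (forall M, - C <= rsum (fun j => lo (J + j)%nat) M) ->
  forall N, rsum lo J - C <= rsum x N.
Proof.
  intros Hx Hneg Htail N.
  assert (Htail' : forall M, rsum (fun j => - lo (J + j)%nat) M <= C).
  { intros M. rewrite rsum_opp. specialize (Htail M). lra. }
  pose proof (partial_sum_upper (fun i => - x i) (fun i => - lo i) J C
                (fun i => Ropp_le_contravar _ _ (Hx i))
                (fun i => ltac:(specialize (Hneg i); lra)) Htail' N) as H.
  rewrite !rsum_opp in H. lra.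
Qed.

Lemma backward_rec_tail P Q u c : admissible P Q -> backward_rec P Q u ->
  forall M, rsum (fun j => Rabs (u (c + j)%nat)) M <= 40 * (Rabs (u c) + Rabs (u (S c))).
Proof.
  intros HPQ Hr M.
  pose proof (backward_rec_decay P Q _ HPQ (backward_rec_shift P Q u c Hr)) as Hdecay.
  simpl in Hdecay. rewrite Nat.add_0_r, Nat.add_1_r in Hdecay.
  eapply Rle_trans;
    [apply (rsum_le _ (fun j => 4 * (Rabs (u c) + Rabs (u (S c))) * rho ^ j)); intros; apply Hdecay|].
  rewrite rsum_scal, geom_sum_rho. pose proof (rho_pow_pos M).
  pose proof (Rabs_pos (u c)); pose proof (Rabs_pos (u (S c))). nra.
Qed.

Lemma max3_spec a b : 0 <= Rmax 0 (Rmax a b) /\ a <= Rmax 0 (Rmax a b) /\ b <= Rmax 0 (Rmax a b).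
Proof.
  pose proof (Rmax_l 0 (Rmax a b)); pose proof (Rmax_r 0 (Rmax a b));
  pose proof (Rmax_l a b); pose proof (Rmax_r a b). lra.
Qed.
Lemma min3_spec a b : Rmin 0 (Rmin a b) <= 0 /\ Rmin 0 (Rmin a b) <= a /\ Rmin 0 (Rmin a b) <= b.
Proof.
  pose proof (Rmin_l 0 (Rmin a b)); pose proof (Rmin_r 0 (Rmin a b));
  pose proof (Rmin_l a b); pose proof (Rmin_r a b). lra.
Qed.

(** * Separation by a linear functional *)

Section Separation.
Variables P Q K g1 g2 : R.
(* number of terms of the expansion treated exactly *)
Variable J : nat.
Hypothesis HPQ : admissible P Q.

(* sigma m = phi(B^{-m} e2); then phi(B^{-m} e1) = sigma (m + 1). *)
Definition sigma (m : nat) : R := lin_form g1 g2 (inv_pow P Q m (0, 1)).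

Lemma sigma_0 : sigma 0 = g2.
Proof. unfold sigma, lin_form; simpl. ring. Qed.

Lemma sigma_1 : sigma 1 = g1.
Proof. unfold sigma. rewrite inv_pow_S. change (inv_pow P Q 0 (0, 1)) with (0, 1). rewrite comp_inv_e2 by auto. unfold lin_form; simpl; ring. Qed.

Lemma sigma_rec : backward_rec P Q sigma.
Proof.
  destruct (inv_pow_rec P Q HPQ (0, 1)) as [R1 R2]. intro n. unfold sigma, lin_form.
  rewrite (R1 n), (R2 n). pose proof (admissible_Q_neq_0 P Q HPQ). field; auto.
Qed.

Lemma phi_inv_pow_Ke2 m : lin_form g1 g2 (inv_pow P Q m (0, K)) = K * sigma m.
Proof.
  unfold sigma. replace (0, K) with (pscale K (0, 1)) by (unfold pscale; simpl; f_equal; ring).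
  unfold inv_pow. rewrite mpow_pscale. unfold lin_form, pscale; simpl. ring.
Qed.

Lemma phi_inv_pow_digit m d : In d (digits K) ->
  lin_form g1 g2 (inv_pow P Q m d) = 0 \/ lin_form g1 g2 (inv_pow P Q m d) = sigma (S m) \/
  (d = (0, K) /\ lin_form g1 g2 (inv_pow P Q m d) = K * sigma m).
Proof.
  intros [<-|[<-|[<-|[]]]].
  - left. rewrite inv_pow_pzero. unfold lin_form, pzero; simpl; ring.
  - right; left. unfold sigma. rewrite inv_pow_S', comp_inv_e2 by auto. reflexivity.
  - right; right. split; [reflexivity|apply phi_inv_pow_Ke2].
Qed.

Definition term (dig : nat -> pt) (i : nat) : R := lin_form g1 g2 (inv_pow P Q (S i) (dig i)).

Lemma phi_expansion dig N : lin_form g1 g2 (expansion P Q dig N) = rsum (term dig) N.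
Proof.
  induction N; [unfold lin_form, expansion; simpl; ring|].
  rewrite expansion_S. simpl. rewrite <- IHN. unfold term, lin_form, padd; simpl. ring.
Qed.

Definition term_max (i : nat) : R := Rmax 0 (Rmax (sigma (i + 3)) (K * sigma (i + 2))).
Definition term_min (i : nat) : R := Rmin 0 (Rmin (sigma (i + 3)) (K * sigma (i + 2))).
Definition tail : R := 40 * (Rabs (sigma (J + 2)) + Rabs (sigma (J + 3))).
Definition upper : R := rsum term_max J + (1 + Rabs K) * tail.
Definition lower : R := rsum term_min J - (1 + Rabs K) * tail.

Lemma term_bounds dig i : digit_seq K dig -> term_min i <= term dig (S i) <= term_max i.
Proof.
  intros Hv. unfold term_min, term_max, term.
  replace (i + 3)%nat with (S (S (S i))) by lia. replace (i + 2)%nat with (S (S i)) by lia.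
  pose proof (max3_spec (sigma (S (S (S i)))) (K * sigma (S (S i)))).
  pose proof (min3_spec (sigma (S (S (S i)))) (K * sigma (S (S i)))).
  destruct (phi_inv_pow_digit (S (S i)) (dig (S i)) (Hv _)) as [E|[E|[_ E]]];
    rewrite E; lra.
Qed.

Lemma sigma_tail c M : rsum (fun j => Rabs (sigma (c + j)%nat)) M <= 40 * (Rabs (sigma c) + Rabs (sigma (S c))).
Proof. apply backward_rec_tail with P Q; auto. apply sigma_rec. Qed.

Lemma term_tail M :
  rsum (fun j => Rabs (sigma (J + 3 + j)%nat) + Rabs K * Rabs (sigma (J + 2 + j)%nat)) M
  <= (1 + Rabs K) * tail.
Proof.
  rewrite rsum_plus, rsum_scal.
  assert (H3 : rsum (fun j => Rabs (sigma (J + 3 + j)%nat)) M <= tail).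
  { pose proof (sigma_tail (J + 2) (S M)) as H.
    replace (S (J + 2)) with (J + 3)%nat in H by lia. fold tail in H.
    rewrite rsum_shift1 in H. pose proof (Rabs_pos (sigma (J + 2 + 0))).
    replace (rsum (fun i => Rabs (sigma (J + 2 + S i)%nat)) M)
      with (rsum (fun j => Rabs (sigma (J + 3 + j)%nat)) M) in H
      by (apply rsum_ext; intros; do 2 f_equal; lia). lra. }
  pose proof (sigma_tail (J + 2) M). replace (S (J + 2)) with (J + 3)%nat in H by lia.
  fold tail in H. pose proof (Rabs_pos K). nra.
Qed.

Lemma later_terms_bounds dig : digit_seq K dig -> forall N,
  lower <= rsum (fun i => term dig (S i)) N <= upper.
Proof.
  intros Hv N.
  assert (Hterm : forall i, Rmax 0 (Rmax (sigma (J + i + 3)) (K * sigma (J + i + 2)))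
                             <= Rabs (sigma (J + 3 + i)%nat) + Rabs K * Rabs (sigma (J + 2 + i)%nat) /\
                            - (Rabs (sigma (J + 3 + i)%nat) + Rabs K * Rabs (sigma (J + 2 + i)%nat))
                             <= Rmin 0 (Rmin (sigma (J + i + 3)) (K * sigma (J + i + 2)))).
  { intros i. replace (J + i + 3)%nat with (J + 3 + i)%nat by lia.
    replace (J + i + 2)%nat with (J + 2 + i)%nat by lia.
    set (a := sigma (J + 3 + i)). set (b := sigma (J + 2 + i)).
    pose proof (Rabs_pos a); pose proof (Rabs_pos b); pose proof (Rabs_pos K).
    pose proof (Rle_abs a); pose proof (Rle_abs (- a)); pose proof (Rle_abs (K * b));
    pose proof (Rle_abs (- (K * b))). rewrite Rabs_Ropp, Rabs_mult in *.
    split; [apply Rmax_lub; [nra|apply Rmax_lub; nra] | apply Rmin_glb; [nra|apply Rmin_glb; nra]]. }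
  split.
  - apply (partial_sum_lower _ term_min J); [intros i; apply (term_bounds dig i Hv)| intros; apply Rmin_l|].
    intros M. pose proof (term_tail M). eapply Rle_trans; [|apply rsum_le; intros i _; apply (Hterm i)].
    rewrite rsum_opp. lra.
  - apply (partial_sum_upper _ term_max J); [intros i; apply (term_bounds dig i Hv)| intros; apply Rmax_l|].
    intros M. eapply Rle_trans; [|apply (term_tail M)]. apply rsum_le; intros i _; apply (Hterm i).
Qed.

Lemma phi_T_bounds dig x : digit_seq K dig -> pt_lim (expansion P Q dig) x ->
  term dig 0 + lower <= lin_form g1 g2 x <= term dig 0 + upper.
Proof.
  intros Hv Hc. pose proof (lin_form_lim g1 g2 _ _ Hc) as Hlim.
  assert (E : forall N, (1 <= N)%nat ->
            lin_form g1 g2 (expansion P Q dig N) = term dig 0 + rsum (fun i => term dig (S i)) (N - 1)).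
  { intros N HN. rewrite (phi_expansion dig N). replace N with (S (N - 1)) at 1 by lia.
    apply rsum_shift1. }
  split.
  - apply (Un_cv_ge_eventually _ _ _ 1 Hlim). intros n Hn. rewrite E by auto.
    destruct (later_terms_bounds dig Hv (n - 1)). lra.
  - apply (Un_cv_le_eventually _ _ _ 1 Hlim). intros n Hn. rewrite E by auto.
    destruct (later_terms_bounds dig Hv (n - 1)). lra.
Qed.

Theorem T_K_disconnected_of_gap :
  (K * g1 + lower > Rmax 0 (sigma 2) + upper) \/ (K * g1 + upper < Rmin 0 (sigma 2) + lower) ->
  ~ connected2 (T_K P Q K).
Proof.
  pose proof (Rmax_l 0 (sigma 2)); pose proof (Rmax_r 0 (sigma 2)).
  pose proof (Rmin_l 0 (sigma 2)); pose proof (Rmin_r 0 (sigma 2)).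
  assert (Hfirst : forall dig, digit_seq K dig ->
            term dig 0 = 0 \/ term dig 0 = sigma 2 \/ term dig 0 = K * g1).
  { intros dig Hv. unfold term. replace (K * g1) with (K * sigma 1) by (rewrite sigma_1; reflexivity).
    destruct (phi_inv_pow_digit 1 (dig O) (Hv O)) as [E|[E|[_ E]]]; auto. }
  set (dig0 := fun _ : nat => pzero).
  set (dig1 := fun i => match i with O => (0, K) | _ => pzero end).
  assert (V0 : digit_seq K dig0) by (intro; left; reflexivity).
  assert (V1 : digit_seq K dig1) by (intros [|i]; [right; right; left|left]; reflexivity).
  destruct (expansion_converges P Q K HPQ dig0 V0) as [x0 Hx0].
  destruct (expansion_converges P Q K HPQ dig1 V1) as [x1 Hx1].
  pose proof (phi_T_bounds dig0 x0 V0 Hx0) as B0.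
  pose proof (phi_T_bounds dig1 x1 V1 Hx1) as B1.
  assert (T0 : term dig0 0 = 0).
  { unfold term, dig0. rewrite inv_pow_pzero. unfold lin_form, pzero; simpl; ring. }
  assert (T1 : term dig1 0 = K * g1).
  { unfold term, dig1. rewrite phi_inv_pow_Ke2, sigma_1. reflexivity. }
  rewrite T0 in B0. rewrite T1 in B1.
  assert (Tx0 : T_K P Q K x0) by (exists dig0; split; [exact V0|exact Hx0]).
  assert (Tx1 : T_K P Q K x1) by (exists dig1; split; [exact V1|exact Hx1]).
  intros [Hg|Hg].
  - apply (not_connected2_of_lin_form _ g1 g2 ((K * g1 + lower + Rmax 0 (sigma 2) + upper) / 2)).
    + intros x [dig [Hv Hc]]. pose proof (phi_T_bounds dig x Hv Hc) as B.
      destruct (Hfirst dig Hv) as [E|[E|E]]; rewrite E in B; lra.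
    + exists x0; split; auto; lra.
    + exists x1; split; auto; lra.
  - apply (not_connected2_of_lin_form _ g1 g2 ((K * g1 + upper + Rmin 0 (sigma 2) + lower) / 2)).
    + intros x [dig [Hv Hc]]. pose proof (phi_T_bounds dig x Hv Hc) as B.
      destruct (Hfirst dig Hv) as [E|[E|E]]; rewrite E in B; lra.
    + exists x1; split; auto; lra.
    + exists x0; split; auto; lra.
Qed.

End Separation.

(** * Reduction of the gap condition to k = ±2 *)

(* The gap condition of [T_K_disconnected_of_gap] is affine in K once the
   termwise maxima are linearized; it therefore holds for all K >= 2
   (resp. K <= -2) as soon as it holds at K = 2 (resp. -2) with a nonnegative
   slope. *)
Section Linearization.
Variables P Q K g1 g2 : R.
Variable J : nat.

Let sig := sigma P Q g1 g2.
Let tl := tail P Q g1 g2 J.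

Definition sum_max (c : R) : R := rsum (fun i => Rmax 0 (Rmax (sig (i + 3)) (c * sig (i + 2)))) J.
Definition sum_min (c : R) : R := rsum (fun i => Rmin 0 (Rmin (sig (i + 3)) (c * sig (i + 2)))) J.
Definition sum_pos : R := rsum (fun i => Rmax 0 (sig (i + 2))) J.
Definition sum_neg : R := rsum (fun i => Rmax 0 (- sig (i + 2))) J.

Definition gap_plus : R := 2 * g1 + sum_min 2 - sum_max 2 - Rmax 0 (sig 2) - 6 * tl.
Definition gap_minus : R := 2 * g1 + sum_min (-2) - sum_max (-2) + Rmin 0 (sig 2) - 6 * tl.
Definition gap_slope : R := g1 - sum_pos - sum_neg - 2 * tl.

Lemma max_linearize a b (s : R) : (s = 2 \/ s = -2) -> K * s >= 4 ->
  Rmax 0 (Rmax a (K * b)) <= Rmax 0 (Rmax a (s * b)) + (K * s / 2 - 2) * Rmax 0 (s / 2 * b).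
Proof.
  intros Hs HK. pose proof (max3_spec a (s * b)).
  pose proof (Rmax_l 0 (s / 2 * b)); pose proof (Rmax_r 0 (s / 2 * b)).
  assert (0 <= (K * s / 2 - 2) * Rmax 0 (s / 2 * b)) by (apply Rmult_le_pos; lra).
  apply Rmax_lub; [lra|]. apply Rmax_lub; [lra|].
  destruct Hs as [-> | ->]; nra.
Qed.

Lemma min_linearize a b (s : R) : (s = 2 \/ s = -2) -> K * s >= 4 ->
  Rmin 0 (Rmin a (s * b)) - (K * s / 2 - 2) * Rmax 0 (- (s / 2 * b)) <= Rmin 0 (Rmin a (K * b)).
Proof.
  intros Hs HK. pose proof (min3_spec a (s * b)).
  pose proof (Rmax_l 0 (- (s / 2 * b))); pose proof (Rmax_r 0 (- (s / 2 * b))).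
  assert (0 <= (K * s / 2 - 2) * Rmax 0 (- (s / 2 * b))) by (apply Rmult_le_pos; lra).
  apply Rmin_glb; [lra|]. apply Rmin_glb; [lra|].
  destruct Hs as [-> | ->]; nra.
Qed.

Lemma gap_of_plus : K >= 2 -> gap_plus > 0 -> gap_slope >= 0 ->
  K * g1 + lower P Q K g1 g2 J > Rmax 0 (sig 2) + upper P Q K g1 g2 J.
Proof.
  intros HK H1 H2. unfold lower, upper, gap_plus, gap_slope in *. fold sig tl.
  assert (A1 : rsum (term_max P Q K g1 g2) J <= sum_max 2 + (K - 2) * sum_pos).
  { unfold sum_max, sum_pos. rewrite <- rsum_scal, <- rsum_plus. apply rsum_le. intros i _.
    pose proof (max_linearize (sig (i + 3)) (sig (i + 2)) 2 ltac:(lra) ltac:(lra)) as H.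
    replace (K * 2 / 2 - 2) with (K - 2) in H by field. replace (2 / 2 * sig (i + 2)) with (sig (i + 2)) in H by field.
    exact H. }
  assert (A2 : sum_min 2 - (K - 2) * sum_neg <= rsum (term_min P Q K g1 g2) J).
  { unfold sum_min, sum_neg. rewrite <- rsum_scal, Rminus_def, <- rsum_opp, <- rsum_plus. apply rsum_le. intros i _.
    pose proof (min_linearize (sig (i + 3)) (sig (i + 2)) 2 ltac:(lra) ltac:(lra)) as H.
    replace (K * 2 / 2 - 2) with (K - 2) in H by field. replace (2 / 2 * sig (i + 2)) with (sig (i + 2)) in H by field.
    exact H. }
  rewrite Rabs_right by lra.
  assert (0 <= (K - 2) * (g1 - sum_pos - sum_neg - 2 * tl)) by (apply Rmult_le_pos; lra).
  nra.
Qed.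

Lemma gap_of_minus : K <= -2 -> gap_minus > 0 -> gap_slope >= 0 ->
  K * g1 + upper P Q K g1 g2 J < Rmin 0 (sig 2) + lower P Q K g1 g2 J.
Proof.
  intros HK H1 H2. unfold lower, upper, gap_minus, gap_slope in *. fold sig tl.
  assert (A1 : rsum (term_max P Q K g1 g2) J <= sum_max (-2) + (- K - 2) * sum_neg).
  { unfold sum_max, sum_neg. rewrite <- rsum_scal, <- rsum_plus. apply rsum_le. intros i _.
    pose proof (max_linearize (sig (i + 3)) (sig (i + 2)) (-2) ltac:(lra) ltac:(lra)) as H.
    replace (K * -2 / 2 - 2) with (- K - 2) in H by field.
    replace (-2 / 2 * sig (i + 2)) with (- sig (i + 2)) in H by field.
    exact H. }
  assert (A2 : sum_min (-2) - (- K - 2) * sum_pos <= rsum (term_min P Q K g1 g2) J).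
  { unfold sum_min, sum_pos. rewrite <- rsum_scal, Rminus_def, <- rsum_opp, <- rsum_plus. apply rsum_le. intros i _.
    pose proof (min_linearize (sig (i + 3)) (sig (i + 2)) (-2) ltac:(lra) ltac:(lra)) as H.
    replace (K * -2 / 2 - 2) with (- K - 2) in H by field.
    replace (- (-2 / 2 * sig (i + 2))) with (sig (i + 2)) in H by field.
    exact H. }
  rewrite Rabs_left by lra.
  assert (0 <= (- K - 2) * (g1 - sum_pos - sum_neg - 2 * tl)) by (apply Rmult_le_pos; lra).
  nra.
Qed.

End Linearization.

(** * Exact integer verification of the gap condition *)

Fixpoint zsum (f : nat -> Z) (n : nat) : Z :=
  match n with O => 0%Z | S m => (zsum f m + f m)%Z end.

Section ScaledIntegers.
Variable D : R.
Hypothesis HD : 0 < D.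

Lemma rsum_scaled (f : nat -> R) (F : nat -> Z) n :
  (forall i, (i < n)%nat -> f i = IZR (F i) / D) -> rsum f n = IZR (zsum F n) / D.
Proof.
  intros H. induction n as [|n IH]; simpl; [unfold Rdiv; ring|].
  rewrite IH by (intros; apply H; lia). rewrite H, plus_IZR by lia. field; lra.
Qed.

Lemma Rmax_scaled a b : Rmax (IZR a / D) (IZR b / D) = IZR (Z.max a b) / D.
Proof.
  destruct (Z.max_spec a b) as [[H1 H2]|[H1 H2]]; rewrite H2.
  - apply Rmax_right. apply IZR_lt in H1. apply Rmult_le_compat_r; [apply Rlt_le, Rinv_0_lt_compat; auto|lra].
  - apply Rmax_left. apply IZR_le in H1. apply Rmult_le_compat_r; [apply Rlt_le, Rinv_0_lt_compat; auto|lra].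
Qed.

Lemma Rmin_scaled a b : Rmin (IZR a / D) (IZR b / D) = IZR (Z.min a b) / D.
Proof.
  destruct (Z.min_spec a b) as [[H1 H2]|[H1 H2]]; rewrite H2.
  - apply Rmin_left. apply IZR_lt in H1. apply Rmult_le_compat_r; [apply Rlt_le, Rinv_0_lt_compat; auto|lra].
  - apply Rmin_right. apply IZR_le in H1. apply Rmult_le_compat_r; [apply Rlt_le, Rinv_0_lt_compat; auto|lra].
Qed.

Lemma mult_scaled c a : IZR c * (IZR a / D) = IZR (c * a) / D.
Proof. rewrite mult_IZR. unfold Rdiv. ring. Qed.

Lemma opp_scaled a : - (IZR a / D) = IZR (- a) / D.
Proof. rewrite opp_IZR. unfold Rdiv. ring. Qed.

Lemma abs_scaled a : Rabs (IZR a / D) = IZR (Z.abs a) / D.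
Proof.
  unfold Rdiv. rewrite Rabs_mult, Rabs_Zabs, (Rabs_right (/ D)); auto.
  apply Rle_ge, Rlt_le, Rinv_0_lt_compat; auto.
Qed.

Lemma zero_scaled : 0 = IZR 0 / D.
Proof. unfold Rdiv; rewrite Rmult_0_l; reflexivity. Qed.

End ScaledIntegers.

Section IntegerCertificate.
Variables pz qz g1z g2z : Z.
Variable J : nat.

(* With Q = 3 qz (qz = ±1) and g1, g2 integers, sigma m = int_sigma m / 3^m
   where int_sigma is an integer recurrence, computed here by pairs. *)
Fixpoint int_sigma_pair (m : nat) : Z * Z :=
  match m with
  | O => (g2z, 3 * g1z)%Z
  | S m' => let (a, b) := int_sigma_pair m' in (b, - qz * (pz * b + 3 * a))%Z
  end.

Definition int_sigma (m : nat) : Z := fst (int_sigma_pair m).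

Lemma int_sigma_rec m : int_sigma (S (S m)) = (- qz * (pz * int_sigma (S m) + 3 * int_sigma m))%Z.
Proof. unfold int_sigma. simpl. destruct (int_sigma_pair m) as [a b]. reflexivity. Qed.

(* Everything is scaled by D = 3^(J+3): zsig m = D * sigma m for m <= J + 3. *)
Definition pow3 (e : nat) : Z := (3 ^ Z.of_nat e)%Z.
Definition zsig (m : nat) : Z := (int_sigma m * pow3 (J + 3 - m))%Z.

Definition z_sum_max (c : Z) : Z := zsum (fun i => Z.max 0 (Z.max (zsig (i + 3)) (c * zsig (i + 2)))) J.
Definition z_sum_min (c : Z) : Z := zsum (fun i => Z.min 0 (Z.min (zsig (i + 3)) (c * zsig (i + 2)))) J.
Definition z_sum_pos : Z := zsum (fun i => Z.max 0 (zsig (i + 2))) J.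
Definition z_sum_neg : Z := zsum (fun i => Z.max 0 (- zsig (i + 2))) J.
Definition z_tail : Z := (40 * (Z.abs (zsig (J + 2)) + Z.abs (zsig (J + 3))))%Z.
Definition z_g1 : Z := (g1z * pow3 (J + 3))%Z.

Definition z_gap_plus : Z :=
  (2 * z_g1 + z_sum_min 2 - z_sum_max 2 - Z.max 0 (zsig 2) - 6 * z_tail)%Z.
Definition z_gap_minus : Z :=
  (2 * z_g1 + z_sum_min (-2) - z_sum_max (-2) + Z.min 0 (zsig 2) - 6 * z_tail)%Z.
Definition z_gap_slope : Z := (z_g1 - z_sum_pos - z_sum_neg - 2 * z_tail)%Z.

Definition gap_check : bool :=
  (Z.ltb 0 z_gap_plus && Z.ltb 0 z_gap_minus && Z.leb 0 z_gap_slope)%bool.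

Variables P Q : R.
Hypothesis HPQ : admissible P Q.
Hypothesis EP : P = IZR pz.
Hypothesis EQ : Q = IZR (3 * qz).
Hypothesis Eqz : qz = 1%Z \/ qz = (-1)%Z.

Let g1 := IZR g1z.
Let g2 := IZR g2z.
Let D : R := 3 ^ (J + 3).

Lemma D_pos : 0 < D.
Proof. apply pow_lt; lra. Qed.

Lemma sigma_int m : sigma P Q g1 g2 m = IZR (int_sigma m) / 3 ^ m.
Proof.
  assert (H : forall m, sigma P Q g1 g2 m = IZR (int_sigma m) / 3 ^ m /\
                        sigma P Q g1 g2 (S m) = IZR (int_sigma (S m)) / 3 ^ (S m)).
  { induction m0.
    - rewrite sigma_0, sigma_1 by auto. unfold int_sigma; cbn [int_sigma_pair fst].
      rewrite mult_IZR. unfold g1, g2. split; field.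
    - destruct IHm0 as [H1 H2]. split; auto.
      rewrite (sigma_rec P Q g1 g2 HPQ), H1, H2, int_sigma_rec, EP, EQ.
      pose proof (pow_lt 3 m0 ltac:(lra)).
      destruct Eqz as [-> | ->]; rewrite ?mult_IZR, ?opp_IZR, ?plus_IZR, ?mult_IZR; simpl; field; lra. }
  apply H.
Qed.

Lemma sigma_scaled m : (m <= J + 3)%nat -> sigma P Q g1 g2 m = IZR (zsig m) / D.
Proof.
  intros Hm. rewrite sigma_int. unfold zsig, pow3, D. rewrite mult_IZR, <- pow_IZR.
  replace (J + 3)%nat with (m + (J + 3 - m))%nat at 2 by lia. rewrite pow_add.
  pose proof (pow_lt 3 m ltac:(lra)). pose proof (pow_lt 3 (J + 3 - m) ltac:(lra)).
  simpl (IZR 3). field. lra.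
Qed.

Ltac scaled_rewrite :=
  rewrite ?sigma_scaled by lia;
  rewrite ?mult_scaled, ?opp_scaled, ?abs_scaled;
  rewrite (zero_scaled D) at 1;
  rewrite ?Rmax_scaled, ?Rmin_scaled by exact D_pos.

Lemma sum_max_scaled c : sum_max P Q g1 g2 J (IZR c) = IZR (z_sum_max c) / D.
Proof. apply rsum_scaled; [exact D_pos|]. intros i Hi. scaled_rewrite. reflexivity. Qed.

Lemma sum_min_scaled c : sum_min P Q g1 g2 J (IZR c) = IZR (z_sum_min c) / D.
Proof. apply rsum_scaled; [exact D_pos|]. intros i Hi. scaled_rewrite. reflexivity. Qed.

Lemma sum_pos_scaled : sum_pos P Q g1 g2 J = IZR z_sum_pos / D.
Proof. apply rsum_scaled; [exact D_pos|]. intros i Hi. scaled_rewrite. reflexivity. Qed.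

Lemma sum_neg_scaled : sum_neg P Q g1 g2 J = IZR z_sum_neg / D.
Proof. apply rsum_scaled; [exact D_pos|]. intros i Hi. scaled_rewrite. reflexivity. Qed.

Lemma tail_scaled : tail P Q g1 g2 J = IZR z_tail / D.
Proof.
  unfold tail, z_tail. rewrite !sigma_scaled, !abs_scaled by (lia || exact D_pos).
  rewrite mult_IZR, plus_IZR. pose proof D_pos. field. lra.
Qed.

Lemma g1_scaled : g1 = IZR z_g1 / D.
Proof.
  pose proof D_pos. unfold z_g1, pow3, D, g1. rewrite mult_IZR, <- pow_IZR. simpl (IZR 3). field. apply pow_nonzero; lra.
Qed.

Lemma gap_check_sound : gap_check = true ->
  gap_plus P Q g1 g2 J > 0 /\ gap_minus P Q g1 g2 J > 0 /\ gap_slope P Q g1 g2 J >= 0.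
Proof.
  intros Hc. unfold gap_check in Hc.
  apply andb_prop in Hc as [Hc H3]. apply andb_prop in Hc as [H1 H2].
  apply Z.ltb_lt, IZR_lt in H1. apply Z.ltb_lt, IZR_lt in H2. apply Z.leb_le, IZR_le in H3.
  pose proof D_pos.
  unfold gap_plus, gap_minus, gap_slope.
  rewrite (sum_max_scaled 2), (sum_min_scaled 2), (sum_max_scaled (-2)), (sum_min_scaled (-2)),
    sum_pos_scaled, sum_neg_scaled, tail_scaled, !sigma_scaled, g1_scaled by lia.
  replace (Rmax 0 (IZR (zsig 2) / D)) with (IZR (Z.max 0 (zsig 2)) / D)
    by (rewrite (zero_scaled D) at 1; symmetry; apply Rmax_scaled; lra).
  replace (Rmin 0 (IZR (zsig 2) / D)) with (IZR (Z.min 0 (zsig 2)) / D)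
    by (rewrite (zero_scaled D) at 1; symmetry; apply Rmin_scaled; lra).
  unfold z_gap_plus, z_gap_minus, z_gap_slope in *.
  repeat rewrite ?minus_IZR, ?plus_IZR, ?mult_IZR in H1.
  repeat rewrite ?minus_IZR, ?plus_IZR, ?mult_IZR in H2.
  repeat rewrite ?minus_IZR, ?plus_IZR, ?mult_IZR in H3.
  assert (0 < / D) by (apply Rinv_0_lt_compat; lra).
  unfold Rdiv. split; [|split]; nra.
Qed.

End IntegerCertificate.

Lemma T_K_disconnected_of_check P Q K pz qz g1z g2z J :
  admissible P Q -> P = IZR pz -> Q = IZR (3 * qz) -> (qz = 1 \/ qz = -1)%Z ->
  gap_check pz qz g1z g2z J = true -> (K >= 2 \/ K <= -2) -> ~ connected2 (T_K P Q K).
Proof.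
  intros HPQ EP EQ Eqz Hc HK.
  destruct (gap_check_sound pz qz g1z g2z J P Q HPQ EP EQ Eqz Hc) as [C1 [C2 C3]].
  apply (T_K_disconnected_of_gap P Q K (IZR g1z) (IZR g2z) J HPQ). destruct HK as [HK|HK].
  - left. apply gap_of_plus; auto.
  - right. apply gap_of_minus; auto.
Qed.

Theorem T_K_disconnected P Q K : admissible P Q -> (K >= 2 \/ K <= -2) -> ~ connected2 (T_K P Q K).
Proof.
  intros HPQ HK. pose proof HPQ as Hcases.
  destruct Hcases as [[-> [-> | [-> | ->]]] | [-> ->]].
  - apply (T_K_disconnected_of_check 1 3 K 1 1 1 (-1) 29); auto; vm_compute; reflexivity.
  - apply (T_K_disconnected_of_check 2 3 K 2 1 3 (-5) 29); auto; vm_compute; reflexivity.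
  - apply (T_K_disconnected_of_check 3 3 K 3 1 1 (-2) 29); auto; vm_compute; reflexivity.
  - apply (T_K_disconnected_of_check 1 (-3) K 1 (-1) 1 (-2) 29); auto; vm_compute; reflexivity.
Qed.

Theorem theorem3p2 (a b c d p q k : Z) (v : R * R) :
  expanding (matZ a b c d) ->
  (- (a + d))%Z = p -> (a * d - b * c)%Z = q ->
  (0 < p)%Z -> (q = 3 \/ q = -3)%Z ->
  k <> 0%Z ->
  lin_indep2 v (mapply (matZ a b c d) v) ->
  (connected2
     (self_affine_set (matZ a b c d)
        (pzero :: v :: pscale (IZR k) (mapply (matZ a b c d) v) :: nil))
   <-> (k = 1 \/ k = -1)%Z).
Proof.
  intros He Hp Hq Hp0 Hq3 Hk Hindep.
  pose proof (expanding_admissible a b c d p q He Hp Hq Hp0 Hq3) as HPQ.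
  rewrite (connected_normal_form a b c d p q k v Hp Hq HPQ Hindep).
  split.
  - (* for |k| >= 2 a linear functional separates T_k *)
    intros HC. destruct (Z.eq_dec k 1) as [|H1]; [auto|]. destruct (Z.eq_dec k (-1)) as [|H2]; [auto|].
    exfalso. apply (T_K_disconnected _ _ (IZR k) HPQ); auto.
    assert (k >= 2 \/ k <= -2)%Z as [H|H] by lia;
      [left; apply Rle_ge, IZR_le | right; apply IZR_le]; lia.
  - (* for k = ±1 the neighbour graph of the digits is connected *)
    intros Hk1. apply T_K_connected; auto.
    destruct Hk1 as [-> | ->]; [left|right]; reflexivity.
Qed.
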